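(* Let $B:\mathbb{R}^2\to\mathbb{R}$ satisfy, for every multi-index $\beta\in\mathbb{N}_0^2$ and some $s_B>4$, $|\partial^\beta B(x)|\lesssim(1+|x|)^{-s_B-|\beta|}$, and suppose $\int_{\mathbb{R}^2}B(x)dx=0$. Then there exists a differentiable vector field $A:\mathbb{R}^2\to\mathbb{R}^2$ with $\mathrm{curl}\,A=B$ such that $$|\nabla\cdot A(x)|\lesssim(1+|x|)^{-3-0},\qquad |A(x)|\lesssim(1+|x|)^{-3-0}.$$
   Context: ''$f\lesssim(1+|x|)^{-a-0}$'' means $(1+|x|)^af(x)\to0$ as $|x|\to\infty$; $f\lesssim g$ means $f\le cg$ for some constant $c$. *)

From Stdlib Require Import Reals List.
From Coquelicot Require Import Coquelicot.
Open Scope R_scope.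

Definition norm2 (x y : R) : R := sqrt (x ^ 2 + y ^ 2).

Definition pd1 (f : R -> R -> R) : R -> R -> R :=
  fun x y => Derive (fun t => f t y) x.
Definition pd2 (f : R -> R -> R) : R -> R -> R :=
  fun x y => Derive (fun t => f x t) y.

(* iterated partial derivatives along a list of directions (true = x, false = y) *)
Fixpoint iterD (l : list bool) (f : R -> R -> R) : R -> R -> R :=
  match l with
  | nil => f
  | b :: l' => (if b then pd1 else pd2) (iterD l' f)
  end.

Definition smooth2 (f : R -> R -> R) : Prop :=
  forall l : list bool,
    (forall x y, continuous (fun p : R * R => iterD l f (fst p) (snd p)) (x, y)) /\
    (forall x y, ex_derive (fun t => iterD l f t y) x /\
                 ex_derive (fun t => iterD l f x t) y).

Definition dmulti (k l : nat) (f : R -> R -> R) : R -> R -> R :=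
  Nat.iter k pd1 (Nat.iter l pd2 f).

Definition differentiable2 (f : R -> R -> R) : Prop :=
  forall x y, ex_filterdiff (fun p : R * R => f (fst p) (snd p)) (locally (x, y)).

(* f ≲ (1+|x|)^{-a-0}  :<=>  (1+|x|)^a f(x) -> 0 as |x| -> oo *)
Definition decay_little (a : R) (f : R -> R -> R) : Prop :=
  forall eps : R, 0 < eps -> exists R0 : R, forall x y,
    R0 < norm2 x y -> Rabs (Rpower (1 + norm2 x y) a * f x y) < eps.

(* integral over R^2, as iterated improper integral (Fubini) *)
Definition integral_R2_is (f : R -> R -> R) (v : R) : Prop :=
  is_RInt_gen
    (fun x => RInt_gen (fun y => f x y) (Rbar_locally m_infty) (Rbar_locally p_infty))
    (Rbar_locally m_infty) (Rbar_locally p_infty) v.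

(* Write F x y = int_(-oo)^y B x t dt, b x = int_R B x t dt and
   b_prim x = int_(-oo)^x b.  The field (-F, 0) has curl B, but F tends to b x
   as y -> +oo.  Subtracting b x times a smooth step in y / <x>, <x> = sqrt (1 + x^2),
   leaves the curl deficit b x bump (y / <x>) / <x>, which is exactly the curl of
   (- b_prim x bump (y / <x>) y <x>' / <x>^2,  b_prim x bump (y / <x>) / <x>).
   By the decay of B, F (for y <= 0) and b - F (for y >= 0) are
   O((1 + |(x,y)|)^(1-s)) and b is O((1 + |x|)^(1-s)); since int b = 0 (this is
   where the mean-zero hypothesis enters), b_prim is O((1 + |x|)^(2-s)).  The
   corrections live in the strip |y| < <x>, where |(x,y)| ~ |x|, and carry a
   factor 1 / <x>, so A and div A are O((1 + |(x,y)|)^(1-s)) with 1 - s < -3.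
   Improper integrals are handled through the substitution t = tan th. *)

From Stdlib Require Import Reals Lra Psatz.
From Coquelicot Require Import Coquelicot.
Open Scope R_scope.

Definition weight (q z : R) : R := Rpower (1 + z) (- q).

Lemma weight_pos q z : 0 <= z -> 0 < weight q z.
Proof. intros. apply exp_pos. Qed.

Lemma weight_plus q1 q2 z : 0 <= z -> weight q1 z * weight q2 z = weight (q1 + q2) z.
Proof. intros. unfold weight. rewrite <- Rpower_plus. f_equal. ring. Qed.

Lemma weight_INR n z : 0 <= z -> weight (INR n) z = / (1 + z) ^ n.
Proof. intros. unfold weight. rewrite Rpower_Ropp, Rpower_pow; auto; lra. Qed.

Lemma weight_1 z : 0 <= z -> weight 1 z = / (1 + z).
Proof.
  intros. change (weight (INR 1) z = / (1 + z)). rewrite weight_INR by auto. now rewrite pow_1.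
Qed.

Lemma weight_decreasing q z1 z2 : 0 <= q -> 0 <= z1 <= z2 -> weight q z2 <= weight q z1.
Proof.
  intros Hq Hz. unfold weight. rewrite !Rpower_Ropp.
  apply Rinv_le_contravar; [apply exp_pos|]. apply Rle_Rpower_l; lra.
Qed.

Lemma weight_le_1 q z : 0 <= q -> 0 <= z -> weight q z <= 1.
Proof.
  intros. replace 1 with (weight q 0)
    by (unfold weight, Rpower; rewrite Rplus_0_r, ln_1, Rmult_0_r; apply exp_0).
  apply weight_decreasing; lra.
Qed.

Lemma weight_le_exponent p q z : q <= p -> 0 <= z -> weight p z <= weight q z.
Proof.
  intros Hpq Hz. replace p with ((p - q) + q) by ring. rewrite <- weight_plus by auto.
  pose proof (weight_le_1 (p - q) z ltac:(lra) Hz). pose proof (weight_pos q z Hz). nra.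
Qed.

Lemma weight_doubling q z1 z2 : 0 <= q -> 0 <= z1 -> 0 <= z2 -> 1 + z2 <= 2 * (1 + z1) ->
  weight q z1 <= Rpower 2 q * weight q z2.
Proof.
  intros Hq H1 H2 H.
  assert (HA : weight q (1 + 2 * z1) <= weight q z2) by (apply weight_decreasing; lra).
  unfold weight in *. replace (1 + (1 + 2 * z1)) with (2 * (1 + z1)) in HA by ring.
  rewrite Rpower_Ropp, <- Rpower_mult_distr, Rinv_mult in HA by lra.
  rewrite !Rpower_Ropp in *.
  assert (A1 : 0 < Rpower 2 q) by apply exp_pos.
  apply (Rmult_le_compat_l (Rpower 2 q)) in HA; [|lra].
  rewrite <- Rmult_assoc, Rinv_r, Rmult_1_l in HA; lra.
Qed.

Lemma norm2_ge0 x y : 0 <= norm2 x y.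
Proof. apply sqrt_pos. Qed.

Lemma norm2_0_r x : norm2 x 0 = Rabs x.
Proof. unfold norm2. rewrite <- sqrt_Rsqr_abs. f_equal. unfold Rsqr. ring. Qed.

Lemma norm2_0_l y : norm2 0 y = Rabs y.
Proof. unfold norm2. rewrite <- sqrt_Rsqr_abs. f_equal. unfold Rsqr. ring. Qed.

Lemma norm2_opp_r x y : norm2 x (- y) = norm2 x y.
Proof. unfold norm2. f_equal. ring. Qed.

Lemma norm2_le_compat_r x y t : Rabs y <= Rabs t -> norm2 x y <= norm2 x t.
Proof.
  intros H. apply sqrt_le_1_alt. rewrite <- (pow2_abs y), <- (pow2_abs t).
  pose proof (Rabs_pos y). nra.
Qed.

Lemma Rabs_le_norm2_l x y : Rabs x <= norm2 x y.
Proof. rewrite <- norm2_0_r. apply norm2_le_compat_r. rewrite Rabs_R0. apply Rabs_pos. Qed.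

Lemma Rabs_le_norm2_r x y : Rabs y <= norm2 x y.
Proof.
  rewrite <- norm2_0_l. apply sqrt_le_1_alt. pose proof (pow2_ge_0 x). lra.
Qed.

Lemma norm2_le_Rabs_plus x y : norm2 x y <= Rabs x + Rabs y.
Proof.
  pose proof (Rabs_pos x); pose proof (Rabs_pos y).
  rewrite <- (sqrt_pow2 (Rabs x + Rabs y)) by lra.
  apply sqrt_le_1_alt. rewrite <- (pow2_abs x), <- (pow2_abs y). nra.
Qed.

Lemma atan_le_id u : 0 <= u -> atan u <= u.
Proof.
  intros Hu. destruct (Req_dec u 0) as [->|Hn]; [rewrite atan_0; lra|].
  destruct (MVT_gen atan 0 u (fun x => / (1 + x²))) as [c [Hc Hd]].
  - intros; apply is_derive_atan.
  - intros. apply derivable_continuous_pt. exists (/ (1 + x ^ 2)). apply derivable_pt_lim_atan.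
  - rewrite atan_0, Rminus_0_r in Hd. rewrite Hd.
    assert (0 < / (1 + c²) <= 1).
    { unfold Rsqr. split; [apply Rinv_0_lt_compat; nra|].
      rewrite <- Rinv_1. apply Rinv_le_contravar; nra. }
    nra.
Qed.

Lemma atan_tail Y : 0 < Y -> PI / 2 - atan Y <= / Y.
Proof.
  intros. rewrite <- atan_inv by auto. apply atan_le_id.
  left; apply Rinv_0_lt_compat; auto.
Qed.

Lemma atan_tail_mult_le Y Z : 0 <= Y -> 0 <= Z <= 2 * Y -> (PI / 2 - atan Y) * (1 + Z) <= 6.
Proof.
  intros HY HZ. pose proof PI_RGT_0. pose proof PI_4. pose proof (atan_bound Y).
  destruct (Rle_lt_dec 1 Y).
  - pose proof (atan_tail Y ltac:(lra)).
    apply Rle_trans with (/ Y * (1 + 2 * Y)); [apply Rmult_le_compat; lra|].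
    rewrite Rmult_plus_distr_l, Rmult_1_r.
    replace (/ Y * (2 * Y)) with 2 by (field; lra).
    assert (/ Y <= 1) by (rewrite <- Rinv_1; apply Rinv_le_contravar; lra). lra.
  - assert (0 <= atan Y).
    { destruct (Req_dec Y 0) as [->|]; [rewrite atan_0; lra|].
      rewrite <- atan_0. left. apply atan_increasing. lra. }
    apply Rle_trans with (PI / 2 * 3); [apply Rmult_le_compat|]; lra.
Qed.

Lemma weight_atan_tail p Y r : 0 <= Y -> 0 <= r <= 2 * Y ->
  weight (p - 2) r * (PI / 2 - atan Y) <= 6 * weight (p - 1) r.
Proof.
  intros HY Hr.
  replace (p - 1) with ((p - 2) + 1) by ring. rewrite <- weight_plus, weight_1 by lra.
  pose proof (atan_tail_mult_le Y r HY Hr). pose proof (weight_pos (p - 2) r ltac:(lra)).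
  pose proof (atan_bound Y).
  replace (weight (p - 2) r * (PI / 2 - atan Y))
    with (weight (p - 2) r * / (1 + r) * ((PI / 2 - atan Y) * (1 + r))) by (field; lra).
  assert (0 < / (1 + r)) by (apply Rinv_0_lt_compat; lra).
  rewrite (Rmult_comm 6). apply Rmult_le_compat_l; [nra | lra].
Qed.

(* The substitution t = tan th turns integrals of h x over (-oo, y] into
   Riemann integrals of [tan_subst h x] over [-PI/2, atan y]; the value 0 at
   |th| >= PI/2 is the continuous extension when h decays fast enough. *)
Definition tan_subst (h : R -> R -> R) (x th : R) : R :=
  if Rlt_dec (Rabs th) (PI / 2) then h x (tan th) * (1 + tan th ^ 2) else 0.

Lemma cos_pos_of_Rabs_lt th : Rabs th < PI / 2 -> 0 < cos th.
Proof. intros H. apply Rabs_def2 in H. apply cos_gt_0; lra. Qed.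

Lemma inv_1_Rabs_tan_le_cos th : Rabs th < PI / 2 -> / (1 + Rabs (tan th)) <= cos th.
Proof.
  intros H. pose proof (cos_pos_of_Rabs_lt th H) as Hc.
  unfold tan. rewrite Rabs_div, (Rabs_pos_eq (cos th)) by lra.
  replace (1 + Rabs (sin th) / cos th) with ((cos th + Rabs (sin th)) / cos th) by (field; lra).
  rewrite Rinv_div.
  pose proof (sin2_cos2 th) as Hsc. unfold Rsqr in Hsc.
  pose proof (Rabs_pos (sin th)).
  assert (Rabs (sin th) * Rabs (sin th) = sin th * sin th)
    by (rewrite <- Rabs_mult; apply Rabs_pos_eq; nra).
  assert (1 <= cos th + Rabs (sin th)) by nra.
  unfold Rdiv. apply Rle_trans with (cos th * 1); [|lra]. apply Rmult_le_compat_l; [lra|].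
  rewrite <- Rinv_1. apply Rinv_le_contravar; lra.
Qed.

Lemma weight_3_sec2_le t : weight 3 (Rabs t) * (1 + t ^ 2) <= / (1 + Rabs t).
Proof.
  pose proof (Rabs_pos t).
  replace 3 with (INR 3) by (simpl; ring). rewrite weight_INR by auto. rewrite <- (pow2_abs t).
  apply (Rmult_le_reg_l ((1 + Rabs t) ^ 3)); [apply pow_lt; lra|].
  field_simplify; [nra | lra | lra].
Qed.

Lemma Rabs_cos_sub_le a b : Rabs (cos a - cos b) <= Rabs (a - b).
Proof.
  destruct (MVT_abs cos (fun x => - sin x) b a) as [c [Hc1 _]].
  - intros. apply derivable_pt_lim_cos.
  - rewrite Hc1, Rabs_Ropp. rewrite <- (Rmult_1_l (Rabs (a - b))) at 2.
    apply Rmult_le_compat_r; [apply Rabs_pos|]. apply Rabs_le, SIN_bound.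
Qed.

Lemma continuous_tan th : Rabs th < PI / 2 -> continuous tan th.
Proof.
  intros H. apply (@ex_derive_continuous R_AbsRing R_NormedModule).
  eexists. apply is_derive_tan. pose proof (cos_pos_of_Rabs_lt th H). lra.
Qed.

Lemma continuous_sec2 th : Rabs th < PI / 2 -> continuous (fun z => 1 + tan z ^ 2) th.
Proof.
  intros H. apply (continuous_plus (fun _ => 1) (fun z => tan z ^ 2)); [apply continuous_const|].
  apply (continuous_mult tan (fun z => tan z ^ 1)); [apply continuous_tan; auto|].
  apply (continuous_mult tan (fun z => 1)); [apply continuous_tan; auto|apply continuous_const].
Qed.

Lemma is_RInt_sec2 K a b : Rabs a < PI / 2 -> Rabs b < PI / 2 -> a <= b ->
  is_RInt (fun th => K * (1 + tan th ^ 2)) a b (K * (tan b - tan a)).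
Proof.
  intros Ha Hb Hab.
  assert (Hin : forall z, Rmin a b <= z <= Rmax a b -> Rabs z < PI / 2).
  { intros z Hz. rewrite Rmin_left, Rmax_right in Hz by lra.
    apply Rabs_def2 in Ha. apply Rabs_def2 in Hb. apply Rabs_def1; lra. }
  replace (K * (tan b - tan a)) with (minus (K * tan b) (K * tan a))
    by (unfold minus, plus, opp; simpl; ring).
  apply (is_RInt_derive (fun z => K * tan z)).
  - intros z Hz. replace (K * (1 + tan z ^ 2)) with (K * (tan z ^ 2 + 1)) by ring.
    apply is_derive_scal, is_derive_tan. pose proof (cos_pos_of_Rabs_lt z (Hin z Hz)). lra.
  - intros z Hz. apply (continuous_scal_r K (fun z => 1 + tan z ^ 2)), continuous_sec2; auto.
Qed.

Lemma mult_inv_lt_of_div_lt C eps z : 0 <= C -> 0 < eps -> (C + 1) / eps < z -> C * / z < eps.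
Proof.
  intros HC He Hz. assert (0 < (C + 1) / eps) by (apply Rdiv_lt_0_compat; lra).
  apply (Rmult_lt_reg_r z); [lra|]. rewrite Rmult_assoc, Rinv_l, Rmult_1_r by lra.
  apply (Rmult_lt_reg_r (/ eps)); [apply Rinv_0_lt_compat; lra|].
  replace (eps * z * / eps) with z by (field; lra). unfold Rdiv in Hz. nra.
Qed.

Section TanSubst.

Variable h : R -> R -> R.
Variable C : R.
Hypothesis C_ge0 : 0 <= C.
Hypothesis h_decay : forall x t, Rabs (h x t) <= C * weight 3 (Rabs t).
Hypothesis h_cont : forall x t, continuous (fun p : R * R => h (fst p) (snd p)) (x, t).

Lemma tan_subst_le_cos x th : Rabs (tan_subst h x th) <= C * Rabs (cos th).
Proof.
  unfold tan_subst. destruct (Rlt_dec (Rabs th) (PI / 2)) as [H|H].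
  - pose proof (inv_1_Rabs_tan_le_cos th H). pose proof (cos_pos_of_Rabs_lt th H).
    rewrite (Rabs_pos_eq (cos th)) by lra.
    rewrite Rabs_mult, (Rabs_pos_eq (1 + tan th ^ 2)) by nra.
    pose proof (weight_3_sec2_le (tan th)). pose proof (h_decay x (tan th)).
    apply Rle_trans with (C * weight 3 (Rabs (tan th)) * (1 + tan th ^ 2));
      [apply Rmult_le_compat_r; nra|].
    rewrite Rmult_assoc. apply Rmult_le_compat_l; lra.
  - rewrite Rabs_R0. apply Rmult_le_pos; auto. apply Rabs_pos.
Qed.

Lemma tan_subst_le x th : Rabs (tan_subst h x th) <= C.
Proof.
  eapply Rle_trans; [apply tan_subst_le_cos|]. rewrite <- (Rmult_1_r C) at 2.
  apply Rmult_le_compat_l; auto. apply Rabs_le, COS_bound.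
Qed.

Lemma tan_subst_cont_interior x th : Rabs th < PI / 2 -> continuity_2d_pt (tan_subst h) x th.
Proof.
  intros H.
  apply continuity_2d_pt_ext_loc with (f := fun u v => h u (tan v) * (1 + tan v ^ 2)).
  - assert (Hd : 0 < PI / 2 - Rabs th) by lra.
    exists (mkposreal _ Hd). intros u v _ Hv. simpl in Hv. unfold tan_subst.
    destruct (Rlt_dec (Rabs v) (PI / 2)) as [|H']; [reflexivity|].
    exfalso. apply H'. pose proof (Rabs_triang_inv v th). lra.
  - apply continuity_2d_pt_mult.
    + apply continuity_2d_pt_filterlim.
      apply (continuous_comp_2 (fun p : R * R => fst p) (fun p : R * R => tan (snd p)) h).
      * apply continuous_fst.
      * apply (continuous_comp (fun p : R * R => snd p) tan);
          [apply continuous_snd | apply continuous_tan; auto].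
      * apply h_cont.
    + apply (continuity_1d_2d_pt_comp (fun z => 1 + tan z ^ 2) (fun _ v => v)).
      * apply continuity_pt_filterlim, continuous_sec2; auto.
      * apply continuity_2d_pt_id2.
Qed.

(* At th = +-PI/2 continuity comes from |tan_subst h x v| <= C |cos v|. *)
Lemma tan_subst_cont_boundary x th : Rabs th = PI / 2 -> continuity_2d_pt (tan_subst h) x th.
Proof.
  intros He eps.
  assert (Hd : 0 < eps / (C + 1)) by (apply Rdiv_lt_0_compat; [apply cond_pos | lra]).
  exists (mkposreal _ Hd). intros u v _ Hv. simpl in Hv.
  unfold tan_subst at 2. destruct (Rlt_dec (Rabs th) (PI / 2)); [lra|].
  rewrite Rminus_0_r.
  assert (Hcth : cos th = 0).
  { unfold Rabs in He. destruct (Rcase_abs th).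
    - replace th with (- (PI / 2)) by lra. rewrite cos_neg. apply cos_PI2.
    - rewrite He. apply cos_PI2. }
  eapply Rle_lt_trans; [apply tan_subst_le_cos|].
  pose proof (Rabs_cos_sub_le v th) as Hlip. rewrite Hcth, Rminus_0_r in Hlip.
  pose proof (cond_pos eps).
  apply Rle_lt_trans with (C * (eps / (C + 1))); [apply Rmult_le_compat_l; lra|].
  apply Rlt_le_trans with ((C + 1) * (eps / (C + 1))); [apply Rmult_lt_compat_r; lra|].
  right; field; lra.
Qed.

Lemma tan_subst_cont_exterior x th : PI / 2 < Rabs th -> continuity_2d_pt (tan_subst h) x th.
Proof.
  intros H eps. assert (Hd : 0 < Rabs th - PI / 2) by lra.
  exists (mkposreal _ Hd). intros u v _ Hv. simpl in Hv.
  unfold tan_subst. destruct (Rlt_dec (Rabs th) (PI / 2)); [lra|].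
  destruct (Rlt_dec (Rabs v) (PI / 2)).
  - exfalso. pose proof (Rabs_triang_inv th v). rewrite Rabs_minus_sym in Hv. lra.
  - rewrite Rminus_0_r, Rabs_R0. apply cond_pos.
Qed.

Lemma continuity_2d_pt_tan_subst x th : continuity_2d_pt (tan_subst h) x th.
Proof.
  destruct (Rtotal_order (Rabs th) (PI / 2)) as [H|[H|H]].
  - apply tan_subst_cont_interior; auto.
  - apply tan_subst_cont_boundary; auto.
  - apply tan_subst_cont_exterior; auto.
Qed.

Lemma continuous_tan_subst x th : continuous (tan_subst h x) th.
Proof.
  apply (continuous_comp_2 (fun _ : R => x) (fun z : R => z) (tan_subst h));
    [apply continuous_const | apply continuous_id |].
  apply continuity_2d_pt_filterlim, continuity_2d_pt_tan_subst.
Qed.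

Lemma ex_RInt_tan_subst x a b : ex_RInt (tan_subst h x) a b.
Proof. apply (@ex_RInt_continuous R_CompleteNormedModule). intros. apply continuous_tan_subst. Qed.

Lemma is_derive_RInt_tan_subst_atan x y :
  is_derive (fun z => RInt (tan_subst h x) (- PI / 2) (atan z)) y (h x y).
Proof.
  assert (HF : is_derive (fun z => RInt (tan_subst h x) (- PI / 2) z) (atan y)
                 (tan_subst h x (atan y))).
  { apply (@is_derive_RInt R_NormedModule (tan_subst h x) _ (- PI / 2)).
    - apply filter_forall. intros. apply (@RInt_correct R_CompleteNormedModule), ex_RInt_tan_subst.
    - apply continuous_tan_subst. }
  assert (H := is_derive_comp _ atan y _ _ HF (is_derive_atan y)).
  replace (h x y) with (scal (/ (1 + y²)) (tan_subst h x (atan y))); [exact H|].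
  unfold tan_subst. pose proof (atan_bound y).
  destruct (Rlt_dec (Rabs (atan y)) (PI / 2)) as [_|H'].
  - rewrite tan_atan. unfold scal; simpl; unfold mult; simpl. unfold Rsqr. field. nra.
  - exfalso. apply H'. apply Rabs_def1; lra.
Qed.

Lemma RInt_tan_subst_le x a b : Rabs (RInt (tan_subst h x) a b) <= C * Rabs (b - a).
Proof.
  assert (Hle : forall a b, a <= b -> Rabs (RInt (tan_subst h x) a b) <= C * (b - a)).
  { intros a' b' Hab. rewrite Rmult_comm.
    apply abs_RInt_le_const; auto using ex_RInt_tan_subst, tan_subst_le. }
  destruct (Rle_lt_dec a b) as [Hab|Hba].
  - rewrite (Rabs_pos_eq (b - a)) by lra. auto.
  - rewrite <- opp_RInt_swap by apply ex_RInt_tan_subst.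
    change (Rabs (- RInt (tan_subst h x) b a) <= C * Rabs (b - a)).
    rewrite Rabs_Ropp, Rabs_minus_sym, (Rabs_pos_eq (a - b)) by lra. apply Hle. lra.
Qed.

Lemma RInt_tan_subst_atan_lim_m_infty x :
  filterlim (fun z => RInt (tan_subst h x) (- PI / 2) (atan z)) (Rbar_locally m_infty) (locally 0).
Proof.
  apply filterlim_locally. intros eps. pose proof (cond_pos eps) as He.
  exists (- (C + 1) / eps). intros z Hz.
  assert (Hz0 : (C + 1) / eps < - z) by (unfold Rdiv in *; lra).
  assert (0 < (C + 1) / eps) by (apply Rdiv_lt_0_compat; lra).
  change (Rabs (RInt (tan_subst h x) (- PI / 2) (atan z) - 0) < eps). rewrite Rminus_0_r.
  eapply Rle_lt_trans; [apply RInt_tan_subst_le|].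
  pose proof (atan_tail (- z) ltac:(lra)) as Htail. rewrite atan_opp in Htail. pose proof (atan_bound z).
  rewrite Rabs_pos_eq by lra.
  apply Rle_lt_trans with (C * / (- z)); [apply Rmult_le_compat_l; lra|].
  apply mult_inv_lt_of_div_lt; auto.
Qed.

Lemma RInt_tan_subst_atan_lim_p_infty x :
  filterlim (fun z => RInt (tan_subst h x) (- PI / 2) (atan z)) (Rbar_locally p_infty)
    (locally (RInt (tan_subst h x) (- PI / 2) (PI / 2))).
Proof.
  apply filterlim_locally. intros eps. pose proof (cond_pos eps) as He.
  exists ((C + 1) / eps). intros z Hz.
  assert (0 < (C + 1) / eps) by (apply Rdiv_lt_0_compat; lra).
  change (Rabs (RInt (tan_subst h x) (- PI / 2) (atan z)
                - RInt (tan_subst h x) (- PI / 2) (PI / 2)) < eps).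
  rewrite <- (RInt_Chasles (tan_subst h x) (- PI / 2) (atan z) (PI / 2)) by apply ex_RInt_tan_subst.
  unfold plus; simpl. rewrite Rminus_plus_distr, Rminus_diag, Rminus_0_l, Rabs_Ropp.
  eapply Rle_lt_trans; [apply RInt_tan_subst_le|].
  pose proof (atan_tail z ltac:(lra)). pose proof (atan_bound z).
  rewrite Rabs_pos_eq by lra.
  apply Rle_lt_trans with (C * / z); [apply Rmult_le_compat_l; lra|].
  apply mult_inv_lt_of_div_lt; auto.
Qed.

Lemma is_RInt_gen_tan_subst x :
  is_RInt_gen (h x) (Rbar_locally m_infty) (Rbar_locally p_infty)
    (RInt (tan_subst h x) (- PI / 2) (PI / 2)).
Proof.
  set (G := fun z => RInt (tan_subst h x) (- PI / 2) (atan z)).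
  assert (HG : forall z, is_derive G z (h x z)) by (intros; apply is_derive_RInt_tan_subst_atan).
  assert (HD : forall z, Derive G z = h x z) by (intros; apply is_derive_unique; auto).
  rewrite <- (Rminus_0_r (RInt _ _ _)).
  apply (is_RInt_gen_ext (Derive G)); [apply filter_forall; intros; apply HD|].
  apply is_RInt_gen_Derive.
  - apply filter_forall. intros. eexists. apply HG.
  - apply filter_forall. intros. apply (continuous_ext (h x)); [intros; symmetry; apply HD|].
    apply (continuous_comp_2 (fun _ : R => x) (fun z : R => z) h);
      [apply continuous_const | apply continuous_id | apply h_cont].
  - apply RInt_tan_subst_atan_lim_m_infty.
  - apply RInt_tan_subst_atan_lim_p_infty.
Qed.

End TanSubst.

Lemma tan_le_of_le_atan th t : Rabs th < PI / 2 -> th <= atan t -> tan th <= t.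
Proof.
  intros Ha H. destruct (Rle_lt_dec (tan th) t) as [|H1]; auto.
  apply atan_increasing in H1. rewrite atan_tan in H1; [lra|]. apply Rabs_def2 in Ha. lra.
Qed.

Definition tail_const (p : R) : R := 7 * Rpower 2 (p - 1) + 6.

Lemma tail_const_pos p : 0 < tail_const p.
Proof. unfold tail_const. assert (0 < Rpower 2 (p - 1)) by apply exp_pos. lra. Qed.

Section TailBounds.

Variable h : R -> R -> R.
Variables C p x : R.
Hypothesis C_ge0 : 0 <= C.
Hypothesis p_ge2 : 2 <= p.
Hypothesis h_decay : forall t, Rabs (h x t) <= C * weight p (norm2 x t).
Hypothesis h_integrable : forall a b, ex_RInt (tan_subst h x) a b.

Lemma tan_subst_le_weight th rho : Rabs th < PI / 2 -> 0 <= rho <= norm2 x (tan th) ->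
  Rabs (tan_subst h x th) <= C * weight (p - 2) rho.
Proof.
  intros H Hr. unfold tan_subst. destruct (Rlt_dec (Rabs th) (PI / 2)) as [_|]; [|lra].
  set (t := tan th) in *.
  rewrite Rabs_mult, (Rabs_pos_eq (1 + _)) by nra.
  pose proof (norm2_ge0 x t). pose proof (Rabs_le_norm2_r x t). pose proof (Rabs_pos t).
  assert (Hw : weight p (norm2 x t) * (1 + t ^ 2) <= weight (p - 2) rho).
  { replace p with ((p - 2) + INR 2) at 1 by (simpl; ring). rewrite <- weight_plus by auto.
    assert (A1 : weight (p - 2) (norm2 x t) <= weight (p - 2) rho) by (apply weight_decreasing; lra).
    assert (A2 : weight (INR 2) (norm2 x t) <= weight (INR 2) (Rabs t))
      by (apply weight_decreasing; simpl; lra).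
    rewrite (weight_INR 2 (Rabs t)) in A2 by lra.
    assert (A3 : / (1 + Rabs t) ^ 2 * (1 + t ^ 2) <= 1).
    { rewrite <- (pow2_abs t). apply (Rmult_le_reg_l ((1 + Rabs t) ^ 2)); [nra|].
      rewrite <- Rmult_assoc, Rinv_r by nra. nra. }
    pose proof (weight_pos (p - 2) (norm2 x t) ltac:(lra)).
    pose proof (weight_pos (INR 2) (norm2 x t) ltac:(lra)).
    rewrite Rmult_assoc. rewrite <- (Rmult_1_r (weight (p - 2) rho)).
    apply Rmult_le_compat; nra. }
  pose proof (h_decay t).
  apply Rle_trans with (C * weight p (norm2 x t) * (1 + t ^ 2)); [apply Rmult_le_compat_r; nra|].
  rewrite Rmult_assoc. apply Rmult_le_compat_l; auto.
Qed.

Lemma RInt_tan_subst_lower_tail Y th1 : 0 <= Y -> - PI / 2 <= th1 <= - atan Y ->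
  Rabs (RInt (tan_subst h x) (- PI / 2) th1)
    <= C * weight (p - 2) (norm2 x Y) * (PI / 2 - atan Y).
Proof.
  intros HY Hth.
  assert (HM : 0 <= C * weight (p - 2) (norm2 x Y))
    by (apply Rmult_le_pos; auto; left; apply weight_pos, norm2_ge0).
  eapply Rle_trans.
  - apply abs_RInt_le_const with (M := C * weight (p - 2) (norm2 x Y)); [lra | apply h_integrable|].
    intros th Ht. destruct (Rlt_dec (Rabs th) (PI / 2)) as [H|H].
    + apply tan_subst_le_weight; auto. split; [apply norm2_ge0|]. apply norm2_le_compat_r.
      assert (tan th <= - Y) by (apply tan_le_of_le_atan; auto; rewrite atan_opp; lra).
      rewrite (Rabs_pos_eq Y), Rabs_left1; lra.
    + unfold tan_subst. destruct (Rlt_dec (Rabs th) (PI / 2)); [lra|]. rewrite Rabs_R0; auto.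
  - rewrite Rmult_comm. apply Rmult_le_compat_l; auto. lra.
Qed.

Lemma RInt_tan_subst_middle a b : - atan (Rabs x) <= a <= b -> b <= atan (Rabs x) ->
  Rabs (RInt (tan_subst h x) a b) <= C * weight p (Rabs x) * (tan b - tan a).
Proof.
  intros Ha Hb. pose proof (atan_bound (Rabs x)).
  assert (Hin : forall z, a <= z <= b -> Rabs z < PI / 2) by (intros z Hz; apply Rabs_def1; lra).
  apply (norm_RInt_le (tan_subst h x) (fun th => C * weight p (Rabs x) * (1 + tan th ^ 2)) a b);
    [lra | | apply (@RInt_correct R_CompleteNormedModule), h_integrable
    | apply is_RInt_sec2; try apply Hin; lra].
  intros z Hz. unfold tan_subst. destruct (Rlt_dec (Rabs z) (PI / 2)) as [_|H'];
    [|exfalso; apply H', Hin; lra].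
  change (Rabs (h x (tan z) * (1 + tan z ^ 2)) <= C * weight p (Rabs x) * (1 + tan z ^ 2)).
  rewrite Rabs_mult, (Rabs_pos_eq (1 + _)) by nra.
  apply Rmult_le_compat_r; [nra|]. eapply Rle_trans; [apply h_decay|].
  apply Rmult_le_compat_l; auto. apply weight_decreasing; [lra|].
  split; [apply Rabs_pos | apply Rabs_le_norm2_l].
Qed.

Lemma RInt_tan_subst_far_tail y : y <= 0 -> Rabs x <= - y ->
  Rabs (RInt (tan_subst h x) (- PI / 2) (atan y)) <= C * 6 * weight (p - 1) (norm2 x y).
Proof.
  intros Hy HXY. set (r := norm2 x y).
  assert (Hrle : r <= Rabs x - y).
  { unfold r. eapply Rle_trans; [apply norm2_le_Rabs_plus|]. rewrite (Rabs_left1 y) by lra. lra. }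
  assert (0 <= r) by apply norm2_ge0. pose proof (Rabs_pos x). pose proof (atan_bound y).
  eapply Rle_trans; [apply (RInt_tan_subst_lower_tail (- y)); [lra | rewrite atan_opp; lra]|].
  rewrite norm2_opp_r. fold r.
  pose proof (weight_atan_tail p (- y) r ltac:(lra) ltac:(lra)).
  rewrite !Rmult_assoc. apply Rmult_le_compat_l; auto.
Qed.

Lemma RInt_tan_subst_to_minus_atan_Rabs :
  Rabs (RInt (tan_subst h x) (- PI / 2) (- atan (Rabs x))) <= C * 6 * weight (p - 1) (Rabs x).
Proof.
  set (X := Rabs x). assert (HX0 : 0 <= X) by apply Rabs_pos.
  eapply Rle_trans; [apply (RInt_tan_subst_lower_tail X); pose proof (atan_bound X); lra|].
  assert (weight (p - 2) (norm2 x X) <= weight (p - 2) X).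
  { apply weight_decreasing; [lra|]. split; auto.
    pose proof (Rabs_le_norm2_r x X) as HH. rewrite (Rabs_pos_eq X) in HH by lra. exact HH. }
  pose proof (weight_atan_tail p X X HX0 ltac:(lra)). pose proof (atan_bound X).
  apply Rle_trans with (C * weight (p - 2) X * (PI / 2 - atan X));
    [apply Rmult_le_compat_r; [lra|]; apply Rmult_le_compat_l; auto|].
  rewrite !Rmult_assoc. apply Rmult_le_compat_l; auto.
Qed.

Lemma RInt_tan_subst_near y : - Rabs x <= y <= 0 ->
  Rabs (RInt (tan_subst h x) (- atan (Rabs x)) (atan y)) <= C * weight (p - 1) (Rabs x).
Proof.
  intros Hy. set (X := Rabs x). assert (HX0 : 0 <= X) by apply Rabs_pos.
  assert (- atan X <= atan y).
  { rewrite <- atan_opp. destruct (Rle_lt_or_eq_dec (- X) y (proj1 Hy)) as [Hlt|<-]; [|lra].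
    left; apply atan_increasing; lra. }
  assert (atan y <= atan X).
  { destruct (Rle_lt_or_eq_dec y X ltac:(lra)) as [Hlt| ->]; [|lra]. left; apply atan_increasing; lra. }
  eapply Rle_trans; [apply RInt_tan_subst_middle; fold X; lra|].
  rewrite tan_atan, tan_neg, tan_atan.
  replace p with ((p - 1) + 1) at 1 by ring. rewrite <- weight_plus, weight_1 by auto.
  pose proof (weight_pos (p - 1) X HX0).
  rewrite !Rmult_assoc. apply Rmult_le_compat_l; auto.
  apply Rle_trans with (weight (p - 1) X * 1); [|lra].
  apply Rmult_le_compat_l; [lra|].
  apply (Rmult_le_reg_l (1 + X)); [lra|]. rewrite <- Rmult_assoc, Rinv_r by lra. lra.
Qed.

(* For -y < |x| split at -atan |x|: the tail estimate applies to the left of it,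
   and the integrand is bounded by the weight at |x| to the right of it. *)
Lemma RInt_tan_subst_lower_bound y : y <= 0 ->
  Rabs (RInt (tan_subst h x) (- PI / 2) (atan y))
    <= C * tail_const p * weight (p - 1) (norm2 x y).
Proof.
  intros Hy. set (r := norm2 x y). set (X := Rabs x).
  assert (HX0 : 0 <= X) by apply Rabs_pos.
  assert (HPr : 0 < weight (p - 1) r) by apply weight_pos, norm2_ge0.
  assert (H2p : 0 < Rpower 2 (p - 1)) by apply exp_pos.
  destruct (Rle_lt_dec X (- y)) as [HXY|HXY].
  - eapply Rle_trans; [apply RInt_tan_subst_far_tail; auto|].
    apply Rmult_le_compat_r; [lra|]. apply Rmult_le_compat_l; auto. unfold tail_const; lra.
  - rewrite <- (RInt_Chasles (tan_subst h x) (- PI / 2) (- atan X) (atan y)) by apply h_integrable.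
    unfold plus; simpl. eapply Rle_trans; [apply Rabs_triang|].
    pose proof RInt_tan_subst_to_minus_atan_Rabs as Hfar.
    pose proof (RInt_tan_subst_near y ltac:(fold X; lra)) as Hnear. fold X in Hfar, Hnear.
    assert (HPs : weight (p - 1) X <= Rpower 2 (p - 1) * weight (p - 1) r).
    { apply weight_doubling; [lra | exact HX0 | apply norm2_ge0 |].
      pose proof (norm2_le_Rabs_plus x y) as Hn. rewrite (Rabs_left1 y) in Hn by lra.
      fold X r in Hn. lra. }
    assert (0 < weight (p - 1) X) by (apply weight_pos; auto).
    apply Rle_trans with (C * 7 * weight (p - 1) X); [lra|].
    unfold tail_const. apply Rle_trans with (C * 7 * (Rpower 2 (p - 1) * weight (p - 1) r));
      [apply Rmult_le_compat_l; lra | nra].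
Qed.

End TailBounds.

Lemma tan_subst_reflect h x th : tan_subst (fun u t => h u (- t)) x th = tan_subst h x (- th).
Proof.
  unfold tan_subst. rewrite Rabs_Ropp. destruct (Rlt_dec (Rabs th) (PI / 2)); auto.
  rewrite tan_neg. f_equal. ring.
Qed.

Lemma RInt_tan_subst_reflect h x a b : (forall a b, ex_RInt (tan_subst h x) a b) ->
  ex_RInt (tan_subst (fun u t => h u (- t)) x) a b /\
  RInt (tan_subst (fun u t => h u (- t)) x) a b = RInt (tan_subst h x) (- b) (- a).
Proof.
  intros Hex.
  assert (Hcl := @is_RInt_comp_lin R_CompleteNormedModule (tan_subst h x) (-1) 0 a b _
                   (RInt_correct _ _ _ (Hex (-1 * a + 0) (-1 * b + 0)))).
  replace (-1 * a + 0) with (- a) in Hcl by ring. replace (-1 * b + 0) with (- b) in Hcl by ring.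
  apply (is_RInt_ext _ (fun z => scal (-1) (tan_subst (fun u t => h u (- t)) x z))) in Hcl;
    [|intros z _; rewrite tan_subst_reflect; replace (-1 * z + 0) with (- z) by ring; reflexivity].
  apply (@is_RInt_scal R_CompleteNormedModule _ a b (-1)) in Hcl.
  apply (is_RInt_ext _ (tan_subst (fun u t => h u (- t)) x)) in Hcl;
    [|intros; unfold scal; simpl; unfold mult; simpl; ring].
  split; [eexists; exact Hcl|]. rewrite (is_RInt_unique _ _ _ _ Hcl).
  rewrite <- (opp_RInt_swap (tan_subst h x)) by apply Hex.
  unfold scal, opp; simpl; unfold mult; simpl. ring.
Qed.

Lemma RInt_tan_subst_upper_bound h C p x y : 0 <= C -> 2 <= p ->
  (forall t, Rabs (h x t) <= C * weight p (norm2 x t)) ->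
  (forall a b, ex_RInt (tan_subst h x) a b) -> 0 <= y ->
  Rabs (RInt (tan_subst h x) (atan y) (PI / 2)) <= C * tail_const p * weight (p - 1) (norm2 x y).
Proof.
  intros HC Hp2 Hp Hex Hy.
  destruct (RInt_tan_subst_reflect h x (- PI / 2) (atan (- y)) Hex) as [_ E].
  rewrite atan_opp, Ropp_involutive in E. replace (- (- PI / 2)) with (PI / 2) in E by field.
  rewrite <- E, <- (norm2_opp_r x y), <- atan_opp.
  apply RInt_tan_subst_lower_bound; auto; [| |lra].
  - intros t. rewrite <- (norm2_opp_r x t). apply Hp.
  - intros a b. apply RInt_tan_subst_reflect; auto.
Qed.

Lemma weight_3_Rabs_of_weight (h : R -> R -> R) C p : 0 <= C -> 3 <= p ->
  (forall x t, Rabs (h x t) <= C * weight p (norm2 x t)) ->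
  forall x t, Rabs (h x t) <= C * weight 3 (Rabs t).
Proof.
  intros HC Hp Hh x t. eapply Rle_trans; [apply Hh|]. apply Rmult_le_compat_l; auto.
  eapply Rle_trans; [apply weight_le_exponent; [exact Hp | apply norm2_ge0]|].
  apply weight_decreasing; [lra|]. split; [apply Rabs_pos | apply Rabs_le_norm2_r].
Qed.

Lemma is_derive_RInt_tan_subst_param (h : R -> R -> R) C1 th x :
  0 <= C1 ->
  (forall x y, ex_derive (fun t => h t y) x) ->
  (forall x t, Rabs (pd1 h x t) <= C1 * weight 3 (Rabs t)) ->
  (forall x t, continuous (fun p : R * R => pd1 h (fst p) (snd p)) (x, t)) ->
  (forall x a b, ex_RInt (tan_subst h x) a b) ->
  is_derive (fun z => RInt (tan_subst h z) (- PI / 2) th) x (RInt (tan_subst (pd1 h) x) (- PI / 2) th).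
Proof.
  intros HC1 Hd Hb1 Hc1 Hex.
  assert (HD : forall u t, is_derive (fun z => tan_subst h z t) u (tan_subst (pd1 h) u t)).
  { intros u t. unfold tan_subst. destruct (Rlt_dec (Rabs t) (PI / 2)).
    - unfold pd1. auto_derive; [exact (Hd u (tan t)) | ring].
    - exact (@is_derive_const R_AbsRing R_NormedModule 0 u). }
  rewrite <- (RInt_ext (fun t => Derive (fun u => tan_subst h u t) x))
    by (intros; apply is_derive_unique, HD).
  apply is_derive_RInt_param.
  - apply filter_forall. intros. eexists; apply HD.
  - intros t _. apply continuity_2d_pt_ext with (f := tan_subst (pd1 h));
      [intros; symmetry; apply is_derive_unique, HD|].
    apply (continuity_2d_pt_tan_subst (pd1 h) C1); auto.
  - apply filter_forall. intros. apply Hex.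
Qed.

(* [prim_y h x y] is int_(-oo)^y h x t dt and [total_y h x] is int_R h x t dt. *)
Definition prim_y (h : R -> R -> R) (x y : R) : R := RInt (tan_subst h x) (- PI / 2) (atan y).
Definition total_y (h : R -> R -> R) (x : R) : R := RInt (tan_subst h x) (- PI / 2) (PI / 2).

Lemma ex_RInt_tan_subst_of_weight (h : R -> R -> R) C p x a b : 0 <= C -> 3 <= p ->
  (forall x t, Rabs (h x t) <= C * weight p (norm2 x t)) ->
  (forall x t, continuous (fun q : R * R => h (fst q) (snd q)) (x, t)) ->
  ex_RInt (tan_subst h x) a b.
Proof. intros. apply (ex_RInt_tan_subst h C); auto. apply (weight_3_Rabs_of_weight h C p); auto. Qed.

Section Primitive.

Variable h : R -> R -> R.
Variables C p x : R.
Hypothesis C_ge0 : 0 <= C.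
Hypothesis p_ge2 : 2 <= p.
Hypothesis h_decay : forall t, Rabs (h x t) <= C * weight p (norm2 x t).
Hypothesis h_integrable : forall a b, ex_RInt (tan_subst h x) a b.

Lemma total_y_sub_prim_y y : total_y h x - prim_y h x y = RInt (tan_subst h x) (atan y) (PI / 2).
Proof.
  unfold total_y, prim_y.
  rewrite <- (RInt_Chasles (tan_subst h x) (- PI / 2) (atan y) (PI / 2)) by apply h_integrable.
  unfold plus; simpl. ring.
Qed.

Lemma prim_y_lower_bound y : y <= 0 ->
  Rabs (prim_y h x y) <= C * tail_const p * weight (p - 1) (norm2 x y).
Proof. intros Hy. apply RInt_tan_subst_lower_bound; auto. Qed.

Lemma prim_y_upper_bound y : 0 <= y ->
  Rabs (total_y h x - prim_y h x y) <= C * tail_const p * weight (p - 1) (norm2 x y).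
Proof. intros Hy. rewrite total_y_sub_prim_y. apply RInt_tan_subst_upper_bound; auto. Qed.

Lemma total_y_bound : Rabs (total_y h x) <= 2 * C * tail_const p * weight (p - 1) (Rabs x).
Proof.
  replace (total_y h x) with (prim_y h x 0 + (total_y h x - prim_y h x 0)) by ring.
  eapply Rle_trans; [apply Rabs_triang|].
  pose proof (prim_y_lower_bound 0 (Rle_refl 0)). pose proof (prim_y_upper_bound 0 (Rle_refl 0)).
  rewrite norm2_0_r in *. lra.
Qed.

End Primitive.

Definition pos_part (u : R) : R := (u + Rabs u) / 2.

Lemma pos_part_pos u : 0 < u -> pos_part u = u.
Proof. intros; unfold pos_part; rewrite Rabs_pos_eq; lra. Qed.

Lemma pos_part_npos u : u <= 0 -> pos_part u = 0.
Proof. intros; unfold pos_part; rewrite Rabs_left1; lra. Qed.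

Lemma pos_part_ge0 u : 0 <= pos_part u.
Proof. unfold pos_part. pose proof (Rle_abs (- u)). rewrite Rabs_Ropp in H. lra. Qed.

Lemma continuous_pos_part u : continuous pos_part u.
Proof.
  apply (continuous_mult (fun z => z + Rabs z) (fun _ => / 2)); [|apply continuous_const].
  apply (continuous_plus (fun z => z) Rabs); [apply continuous_id | apply continuous_Rabs].
Qed.

Lemma is_derive_pos_part_sq u : is_derive (fun z => pos_part z ^ 2) u (2 * pos_part u).
Proof.
  destruct (Rtotal_order u 0) as [H|[->|H]].
  - apply is_derive_ext_loc with (f := fun _ => 0).
    + assert (Hd : 0 < - u) by lra. exists (mkposreal _ Hd). intros t Ht.
      change (Rabs (t - u) < - u) in Ht.
      apply Rabs_def2 in Ht. rewrite pos_part_npos by lra. simpl; ring.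
    + rewrite pos_part_npos by lra. rewrite Rmult_0_r. apply (@is_derive_const R_AbsRing).
  - rewrite pos_part_npos, Rmult_0_r by lra.
    apply is_derive_Reals. intros eps Heps.
    exists (mkposreal eps Heps). intros d Hd0 Hd. simpl in Hd.
    rewrite Rplus_0_l, (pos_part_npos 0) by lra.
    destruct (Rlt_le_dec 0 d).
    + rewrite pos_part_pos by lra. replace ((d ^ 2 - 0 ^ 2) / d - 0) with d by (field; lra). auto.
    + rewrite pos_part_npos by lra. replace ((0 ^ 2 - 0 ^ 2) / d - 0) with 0 by (field; lra).
      rewrite Rabs_R0; lra.
  - apply is_derive_ext_loc with (f := fun z => z ^ 2).
    + exists (mkposreal u H). intros t Ht. change (Rabs (t - u) < u) in Ht.
      apply Rabs_def2 in Ht. rewrite pos_part_pos by lra. reflexivity.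
    + rewrite pos_part_pos by lra. auto_derive; auto. ring.
Qed.

(* 15/16 normalizes the mass of the bump to 1 (smooth_step_1). *)
Definition bump (z : R) : R := 15 / 16 * pos_part (1 - z ^ 2) ^ 2.
Definition bump' (z : R) : R := 15 / 16 * (2 * pos_part (1 - z ^ 2)) * (- 2 * z).

Lemma is_derive_bump z : is_derive bump z (bump' z).
Proof.
  unfold bump, bump'.
  replace (15 / 16 * (2 * pos_part (1 - z ^ 2)) * (-2 * z))
    with (15 / 16 * ((- 2 * z) * (2 * pos_part (1 - z ^ 2)))) by ring.
  apply (is_derive_scal (fun z => pos_part (1 - z ^ 2) ^ 2)).
  apply (is_derive_comp (fun u => pos_part u ^ 2) (fun z => 1 - z ^ 2));
    [apply is_derive_pos_part_sq | auto_derive; auto; ring].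
Qed.

Lemma continuous_bump z : continuous bump z.
Proof. apply (@ex_derive_continuous R_AbsRing R_NormedModule). eexists; apply is_derive_bump. Qed.

Lemma continuous_bump' z : continuous bump' z.
Proof.
  apply (continuous_mult (fun z => 15 / 16 * (2 * pos_part (1 - z ^ 2))) (fun z => - 2 * z)).
  - apply (continuous_mult (fun _ => 15 / 16) (fun z => 2 * pos_part (1 - z ^ 2)));
      [apply continuous_const|].
    apply (continuous_mult (fun _ => 2) (fun z => pos_part (1 - z ^ 2))); [apply continuous_const|].
    apply (continuous_comp (fun z => 1 - z ^ 2) pos_part); [|apply continuous_pos_part].
    apply (@ex_derive_continuous R_AbsRing R_NormedModule). auto_derive; auto.
  - apply (@ex_derive_continuous R_AbsRing R_NormedModule). auto_derive; auto.
Qed.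

Lemma pos_part_1_sub_sq_le z : pos_part (1 - z ^ 2) <= 1.
Proof.
  destruct (Rlt_le_dec 0 (1 - z ^ 2)).
  - rewrite pos_part_pos by lra. nra.
  - rewrite pos_part_npos by lra. lra.
Qed.

Lemma bump_out z : 1 <= Rabs z -> bump z = 0 /\ bump' z = 0.
Proof.
  intros H. assert (1 <= z ^ 2) by (rewrite <- (pow2_abs z); nra).
  unfold bump, bump'. rewrite pos_part_npos by lra. split; ring.
Qed.

Lemma bump_bound z : 0 <= bump z <= 1.
Proof.
  unfold bump. pose proof (pos_part_ge0 (1 - z ^ 2)). pose proof (pos_part_1_sub_sq_le z).
  split; nra.
Qed.

Lemma Rabs_bump_le z : Rabs (bump z) <= 1.
Proof. pose proof (bump_bound z). rewrite Rabs_pos_eq; lra. Qed.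

Lemma Rabs_bump'_le z : Rabs (bump' z) <= 4.
Proof.
  destruct (Rle_lt_dec 1 (Rabs z)) as [H|H].
  - rewrite (proj2 (bump_out z H)), Rabs_R0; lra.
  - unfold bump'. pose proof (pos_part_ge0 (1 - z ^ 2)). pose proof (pos_part_1_sub_sq_le z).
    rewrite !Rabs_mult, (Rabs_pos_eq (15 / 16)), (Rabs_pos_eq (pos_part _)), (Rabs_pos_eq 2),
      (Rabs_left (-2)) by lra.
    pose proof (Rabs_pos z). nra.
Qed.

Lemma ex_RInt_bump a b : ex_RInt bump a b.
Proof. apply (@ex_RInt_continuous R_CompleteNormedModule). intros; apply continuous_bump. Qed.

Definition smooth_step (z : R) : R := RInt bump (-1) z.

Lemma is_derive_smooth_step z : is_derive smooth_step z (bump z).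
Proof.
  apply (@is_derive_RInt R_NormedModule bump smooth_step (-1) z); [|apply continuous_bump].
  apply filter_forall. intros. apply (@RInt_correct R_CompleteNormedModule), ex_RInt_bump.
Qed.

Lemma smooth_step_low z : z <= -1 -> smooth_step z = 0.
Proof.
  intros H. unfold smooth_step. rewrite (RInt_ext bump (fun _ => 0)).
  - rewrite RInt_const. unfold scal; simpl; unfold mult; simpl; ring.
  - intros t Ht. rewrite Rmax_left in Ht by lra. apply bump_out. rewrite Rabs_left; lra.
Qed.

Lemma smooth_step_1 : smooth_step 1 = 1.
Proof.
  unfold smooth_step. rewrite (RInt_ext bump (fun z => 15 / 16 * (1 - z ^ 2) ^ 2)).
  - assert (HH : is_RInt (fun z => 15 / 16 * (1 - z ^ 2) ^ 2) (-1) 1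
      (minus (15 / 16 * (1 - 2 / 3 * 1 ^ 3 + / 5 * 1 ^ 5))
             (15 / 16 * (-1 - 2 / 3 * (-1) ^ 3 + / 5 * (-1) ^ 5)))).
    { apply (is_RInt_derive (fun z => 15 / 16 * (z - 2 / 3 * z ^ 3 + / 5 * z ^ 5))).
      + intros. auto_derive; auto. field.
      + intros. apply (@ex_derive_continuous R_AbsRing R_NormedModule). auto_derive; auto. }
    rewrite (is_RInt_unique _ _ _ _ HH). unfold minus, plus, opp; simpl. field.
  - intros t Ht. rewrite Rmin_left, Rmax_right in Ht by lra.
    unfold bump. rewrite pos_part_pos; [reflexivity | nra].
Qed.

Lemma smooth_step_high z : 1 <= z -> smooth_step z = 1.
Proof.
  intros H. unfold smooth_step.
  rewrite <- (RInt_Chasles bump (-1) 1 z) by apply ex_RInt_bump.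
  fold (smooth_step 1). rewrite smooth_step_1.
  rewrite (RInt_ext bump (fun _ => 0)).
  - rewrite RInt_const. unfold plus, scal; simpl; unfold mult; simpl; ring.
  - intros t Ht. rewrite Rmin_left in Ht by lra. apply bump_out. rewrite Rabs_pos_eq; lra.
Qed.

Lemma smooth_step_bound z : 0 <= smooth_step z <= 1.
Proof.
  destruct (Rle_lt_dec z (-1)); [rewrite smooth_step_low; lra|].
  destruct (Rle_lt_dec 1 z); [rewrite smooth_step_high; lra|].
  assert (Hpos : forall a b, a <= b -> 0 <= RInt bump a b)
    by (intros; apply RInt_ge_0; auto using ex_RInt_bump; intros; apply bump_bound).
  split; [apply Hpos; lra|].
  rewrite <- smooth_step_1. unfold smooth_step.
  rewrite <- (RInt_Chasles bump (-1) z 1) by apply ex_RInt_bump.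
  unfold plus; simpl. pose proof (Hpos z 1). lra.
Qed.

Definition bracket (u : R) : R := sqrt (1 + u ^ 2).
Definition bracket' (u : R) : R := u / bracket u.
Definition bracket'' (u : R) : R := / bracket u ^ 3.

Lemma bracket_sq u : bracket u * bracket u = 1 + u ^ 2.
Proof. apply sqrt_sqrt. nra. Qed.

Lemma bracket_pos u : 0 < bracket u.
Proof. apply sqrt_lt_R0. nra. Qed.

Lemma bracket_neq0 u : bracket u <> 0.
Proof. pose proof (bracket_pos u). lra. Qed.

Lemma bracket_ge1 u : 1 <= bracket u.
Proof. pose proof (bracket_sq u). pose proof (bracket_pos u). nra. Qed.

Lemma Rabs_le_bracket u : Rabs u <= bracket u.
Proof.
  pose proof (bracket_sq u). pose proof (bracket_pos u). rewrite <- (pow2_abs u) in H.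
  pose proof (Rabs_pos u). nra.
Qed.

Lemma bracket_le u : bracket u <= 1 + Rabs u.
Proof.
  pose proof (bracket_sq u). pose proof (bracket_pos u). rewrite <- (pow2_abs u) in H.
  pose proof (Rabs_pos u). nra.
Qed.

Lemma Rabs_bracket'_le u : Rabs (bracket' u) <= 1.
Proof.
  unfold bracket'. pose proof (bracket_pos u).
  rewrite Rabs_div, (Rabs_pos_eq (bracket u)) by lra.
  apply (Rmult_le_reg_r (bracket u)); auto. field_simplify; try lra.
  pose proof (Rabs_le_bracket u). lra.
Qed.

Lemma Rabs_inv_bracket_le u : Rabs (1 / bracket u) <= 1.
Proof.
  pose proof (bracket_ge1 u). unfold Rdiv. rewrite Rmult_1_l.
  rewrite Rabs_pos_eq by (left; apply Rinv_0_lt_compat; lra).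
  rewrite <- Rinv_1. apply Rinv_le_contravar; lra.
Qed.

Lemma Rabs_bracket''_le u : Rabs (bracket'' u) <= 1.
Proof.
  unfold bracket''. pose proof (bracket_ge1 u).
  assert (1 <= bracket u ^ 3) by (rewrite <- (pow1 3); apply pow_incr; lra).
  rewrite Rabs_pos_eq by (left; apply Rinv_0_lt_compat; lra).
  rewrite <- Rinv_1. apply Rinv_le_contravar; lra.
Qed.

Lemma is_derive_bracket u : is_derive bracket u (bracket' u).
Proof.
  unfold bracket', bracket. auto_derive; [nra|].
  replace (u * (u * 1)) with (u ^ 2) by ring.
  field. apply Rgt_not_eq, sqrt_lt_R0. nra.
Qed.

Lemma is_derive_bracket' u : is_derive bracket' u (bracket'' u).
Proof.
  pose proof (bracket_pos u) as Hw. pose proof (is_derive_bracket u) as H.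
  unfold bracket'. auto_derive.
  - repeat split; [eexists; exact H | lra].
  - replace (Derive (fun x => bracket x) u) with (bracket' u)
      by (symmetry; apply is_derive_unique; exact H).
    unfold bracket', bracket''.
    replace (u * (- (1 * (u / bracket u)) * / (bracket u * bracket u)))
      with (- (u * u) / bracket u ^ 3) by (field; lra).
    replace (u * u) with (bracket u * bracket u - 1) by (rewrite bracket_sq; ring).
    field. lra.
Qed.

Lemma continuous_of_is_derive (f df : R -> R) : (forall z, is_derive f z (df z)) ->
  forall z, continuous f z.
Proof. intros H z. apply (@ex_derive_continuous R_AbsRing R_NormedModule). eexists; apply H. Qed.

(* The mean value theorem in y makes continuity of the y-partial alone sufficient. *)
Lemma differentiable_pt_lim_of_partials (f p1 p2 : R -> R -> R) x y :
  (forall u v, is_derive (fun z => f z v) u (p1 u v)) ->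
  (forall u v, is_derive (fun z => f u z) v (p2 u v)) ->
  continuity_2d_pt p2 x y ->
  differentiable_pt_lim f x y (p1 x y) (p2 x y).
Proof.
  intros H1 H2 Hc eps.
  assert (He2 : 0 < eps / 2) by (pose proof (cond_pos eps); lra).
  destruct (proj1 (is_derive_Reals _ _ _) (H1 x y) (eps / 2) He2) as [d1 Hd1].
  destruct (Hc (mkposreal _ He2)) as [d2 Hd2].
  assert (Hd : 0 < Rmin d1 d2) by (apply Rmin_pos; apply cond_pos).
  exists (mkposreal _ Hd). intros u v Hu Hv. simpl in Hu, Hv.
  pose proof (Rmin_l d1 d2). pose proof (Rmin_r d1 d2).
  assert (PA : Rabs (f u y - f x y - p1 x y * (u - x)) <= eps / 2 * Rabs (u - x)).
  { destruct (Req_dec u x) as [->|Hne].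
    - replace (f x y - f x y - p1 x y * (x - x)) with 0 by ring. rewrite Rabs_R0.
      apply Rmult_le_pos; [lra | apply Rabs_pos].
    - specialize (Hd1 (u - x) ltac:(lra) ltac:(simpl; lra)). simpl in Hd1.
      replace (x + (u - x)) with u in Hd1 by ring.
      replace (f u y - f x y - p1 x y * (u - x))
        with (((f u y - f x y) / (u - x) - p1 x y) * (u - x)) by (field; lra).
      rewrite Rabs_mult. apply Rmult_le_compat_r; [apply Rabs_pos | lra]. }
  assert (PB : Rabs (f u v - f u y - p2 x y * (v - y)) <= eps / 2 * Rabs (v - y)).
  { destruct (MVT_gen (fun z => f u z) y v (p2 u)) as [c [Hc1 Hc2]].
    - intros; apply H2.
    - intros. apply continuity_pt_filterlim.
      apply (@ex_derive_continuous R_AbsRing R_NormedModule). eexists; apply H2.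
    - rewrite Hc2.
      replace (p2 u c * (v - y) - p2 x y * (v - y)) with ((p2 u c - p2 x y) * (v - y)) by ring.
      rewrite Rabs_mult. apply Rmult_le_compat_r; [apply Rabs_pos|].
      left. apply (Hd2 u c); [lra|].
      unfold Rmin, Rmax in Hc1. destruct (Rle_dec y v); apply Rabs_def2 in Hv; apply Rabs_def1; lra. }
  replace (f u v - f x y - (p1 x y * (u - x) + p2 x y * (v - y)))
    with ((f u v - f u y - p2 x y * (v - y)) + (f u y - f x y - p1 x y * (u - x))) by ring.
  eapply Rle_trans; [apply Rabs_triang|].
  pose proof (Rmax_l (Rabs (u - x)) (Rabs (v - y))).
  pose proof (Rmax_r (Rabs (u - x)) (Rabs (v - y))).
  pose proof (cond_pos eps). nra.
Qed.

Lemma ex_filterdiff_of_partials f p1 p2 x y :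
  (forall u v, is_derive (fun z => f z v) u (p1 u v)) ->
  (forall u v, is_derive (fun z => f u z) v (p2 u v)) ->
  continuity_2d_pt p2 x y ->
  ex_filterdiff (fun p : R * R => f (fst p) (snd p)) (locally (x, y)).
Proof.
  intros H1 H2 Hc. eexists. apply filterdiff_differentiable_pt_lim.
  apply differentiable_pt_lim_of_partials; auto.
Qed.

Lemma pd1_of_is_derive (f df : R -> R -> R) :
  (forall x y, is_derive (fun z => f z y) x (df x y)) -> forall x y, pd1 f x y = df x y.
Proof. intros H x y. apply is_derive_unique, H. Qed.

Lemma pd2_of_is_derive (f df : R -> R -> R) :
  (forall x y, is_derive (fun z => f x z) y (df x y)) -> forall x y, pd2 f x y = df x y.
Proof. intros H x y. apply is_derive_unique, H. Qed.

(* auto_derive leaves derivatives of the atoms in this eta-expanded form. *)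
Lemma Derive_bracket u : Derive (fun x => bracket x) u = bracket' u.
Proof. apply is_derive_unique, is_derive_bracket. Qed.
Lemma Derive_bracket' u : Derive (fun x => bracket' x) u = bracket'' u.
Proof. apply is_derive_unique, is_derive_bracket'. Qed.
Lemma Derive_bump u : Derive (fun x => bump x) u = bump' u.
Proof. apply is_derive_unique, is_derive_bump. Qed.
Lemma Derive_smooth_step u : Derive (fun x => smooth_step x) u = bump u.
Proof. apply is_derive_unique, is_derive_smooth_step. Qed.

Lemma continuity_2d_pt_of_fst (f : R -> R) x y :
  (forall z, continuous f z) -> continuity_2d_pt (fun u v => f u) x y.
Proof.
  intros H. apply (continuity_1d_2d_pt_comp f (fun u _ => u));
    [apply continuity_pt_filterlim, H | apply continuity_2d_pt_id1].
Qed.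

Lemma continuous_inv_bracket_pow n z : continuous (fun z => / bracket z ^ n) z.
Proof.
  apply (@ex_derive_continuous R_AbsRing R_NormedModule). auto_derive.
  split; [eexists; apply is_derive_bracket|]. split; [|exact I].
  apply pow_nonzero, bracket_neq0.
Qed.

Lemma continuous_inv_bracket z : continuous (fun z => / bracket z) z.
Proof.
  apply (@ex_derive_continuous R_AbsRing R_NormedModule). auto_derive.
  split; [eexists; apply is_derive_bracket | split; [apply bracket_neq0 | exact I]].
Qed.

Lemma continuity_2d_pt_scaled (f : R -> R) x y : (forall z, continuous f z) ->
  continuity_2d_pt (fun u v => f (v * / bracket u)) x y.
Proof.
  intros H. apply (continuity_1d_2d_pt_comp f (fun u v => v * / bracket u));
    [apply continuity_pt_filterlim, H|].
  apply continuity_2d_pt_mult; [apply continuity_2d_pt_id2|].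
  apply (continuity_2d_pt_of_fst (fun z => / bracket z)), continuous_inv_bracket.
Qed.

Section Potential.

(* F x y = int_(-oo)^y B x t dt,  b x = int_R B x t dt,  b_prim x = int_(-oo)^x b. *)
Variables (B F F_x : R -> R -> R) (b b' b_prim : R -> R).
Hypothesis F_dx : forall u v, is_derive (fun z => F z v) u (F_x u v).
Hypothesis F_dy : forall u v, is_derive (fun z => F u z) v (B u v).
Hypothesis b_deriv : forall u, is_derive b u (b' u).
Hypothesis b_prim_deriv : forall u, is_derive b_prim u (b u).
Hypothesis B_cont : forall u v, continuity_2d_pt B u v.

Definition Ax u v := - F u v + b u * smooth_step (v / bracket u)
  - b_prim u * bump (v / bracket u) * v * bracket' u / bracket u ^ 2.
Definition Ay u v := b_prim u * bump (v / bracket u) / bracket u.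

Definition Ax_x u v := - F_x u v + b' u * smooth_step (v / bracket u)
  - 2 * b u * bump (v / bracket u) * v * bracket' u / bracket u ^ 2
  + b_prim u * bump' (v / bracket u) * v ^ 2 * bracket' u ^ 2 / bracket u ^ 4
  - b_prim u * bump (v / bracket u) * v
      * (bracket'' u / bracket u ^ 2 - 2 * bracket' u ^ 2 / bracket u ^ 3).
Definition Ax_y u v := - B u v + b u * bump (v / bracket u) / bracket u
  - b_prim u * (bump' (v / bracket u) * v / bracket u + bump (v / bracket u))
      * bracket' u / bracket u ^ 2.
Definition Ay_x u v := b u * bump (v / bracket u) / bracket u
  - b_prim u * bump' (v / bracket u) * v * bracket' u / bracket u ^ 3
  - b_prim u * bump (v / bracket u) * bracket' u / bracket u ^ 2.
Definition Ay_y u v := b_prim u * bump' (v / bracket u) / bracket u ^ 2.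

Lemma curl_A u v : Ay_x u v - Ax_y u v = B u v.
Proof. unfold Ay_x, Ax_y. pose proof (bracket_pos u). field. lra. Qed.

Local Ltac ex_derive_atoms := repeat split; repeat match goal with
  | |- ex_derive (fun x => bracket x) _ => eexists; apply is_derive_bracket
  | |- ex_derive (fun x => bracket' x) _ => eexists; apply is_derive_bracket'
  | |- ex_derive (fun x => bump x) _ => eexists; apply is_derive_bump
  | |- ex_derive (fun x => smooth_step x) _ => eexists; apply is_derive_smooth_step
  | |- ex_derive (fun x => F x _) _ => eexists; apply F_dx
  | |- ex_derive (fun x => F _ x) _ => eexists; apply F_dy
  | |- ex_derive (fun x => b x) _ => eexists; apply b_deriv
  | |- ex_derive (fun x => b_prim x) _ => eexists; apply b_prim_deriv
  | |- _ <> 0 => repeat apply Rmult_integral_contrapositive_currified;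
                 first [apply bracket_neq0 | lra]
  | |- True => exact I
  end.

Local Ltac derive_A u := auto_derive; [ex_derive_atoms|];
  rewrite ?Derive_bracket, ?Derive_bracket', ?Derive_bump, ?Derive_smooth_step;
  repeat match goal with
  | |- context [Derive (fun x => F x ?v) ?u] =>
      replace (Derive (fun x => F x v) u) with (F_x u v) by (symmetry; apply is_derive_unique, F_dx)
  | |- context [Derive (fun x => F ?u x) ?v] =>
      replace (Derive (fun x => F u x) v) with (B u v) by (symmetry; apply is_derive_unique, F_dy)
  | |- context [Derive (fun x => b x) ?u] =>
      replace (Derive (fun x => b x) u) with (b' u) by (symmetry; apply is_derive_unique, b_deriv)
  | |- context [Derive (fun x => b_prim x) ?u] =>
      replace (Derive (fun x => b_prim x) u) with (b u)
        by (symmetry; apply is_derive_unique, b_prim_deriv)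
  end;
  unfold Rdiv; pose proof (bracket_pos u); field; lra.

Lemma is_derive_Ax_x u v : is_derive (fun z => Ax z v) u (Ax_x u v).
Proof. unfold Ax, Ax_x. derive_A u. Qed.
Lemma is_derive_Ax_y u v : is_derive (fun z => Ax u z) v (Ax_y u v).
Proof. unfold Ax, Ax_y. derive_A u. Qed.
Lemma is_derive_Ay_x u v : is_derive (fun z => Ay z v) u (Ay_x u v).
Proof. unfold Ay, Ay_x. derive_A u. Qed.
Lemma is_derive_Ay_y u v : is_derive (fun z => Ay u z) v (Ay_y u v).
Proof. unfold Ay, Ay_y. derive_A u. Qed.

Local Ltac continuity_2d_A :=
  unfold Rdiv;
  repeat first [ apply B_cont
    | apply (continuity_2d_pt_scaled bump) | apply (continuity_2d_pt_scaled bump')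
    | apply (continuity_2d_pt_of_fst b) | apply (continuity_2d_pt_of_fst b_prim)
    | apply (continuity_2d_pt_of_fst bracket')
    | apply (continuity_2d_pt_of_fst (fun z => / bracket z))
    | apply (continuity_2d_pt_of_fst (fun z => / bracket z ^ 2))
    | apply continuity_2d_pt_id2
    | apply continuity_2d_pt_plus | apply continuity_2d_pt_minus
    | apply continuity_2d_pt_mult | apply continuity_2d_pt_opp ];
  intro z; lazymatch goal with
  | |- continuous bump _ => apply continuous_bump
  | |- continuous bump' _ => apply continuous_bump'
  | |- continuous (fun z => / bracket z) _ => apply continuous_inv_bracket
  | |- continuous (fun z => / bracket z ^ _) _ => apply continuous_inv_bracket_pow
  | |- continuous b _ => apply (continuous_of_is_derive _ _ b_deriv)
  | |- continuous b_prim _ => apply (continuous_of_is_derive _ _ b_prim_deriv)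
  | |- continuous bracket' _ => apply (continuous_of_is_derive _ _ is_derive_bracket')
  end.

Lemma continuity_2d_pt_Ax_y x y : continuity_2d_pt Ax_y x y.
Proof. unfold Ax_y. continuity_2d_A. Qed.

Lemma continuity_2d_pt_Ay_y x y : continuity_2d_pt Ay_y x y.
Proof. unfold Ay_y. continuity_2d_A. Qed.

End Potential.

Lemma decay_little_3_of_weight (f : R -> R -> R) M q : 0 <= M -> 3 < q ->
  (forall x y, Rabs (f x y) <= M * weight q (norm2 x y)) -> decay_little 3 f.
Proof.
  intros HM Hq Hf eps Heps.
  set (R0 := exp (Rabs (ln ((M + 1) / eps)) / (q - 3))).
  exists R0. intros x y Hr. set (r := norm2 x y) in *.
  assert (Hr0 : 0 <= r) by apply norm2_ge0.
  assert (HR0 : 0 < R0) by apply exp_pos.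
  assert (Hpw : 0 < Rpower (1 + r) 3) by apply exp_pos.
  rewrite Rabs_mult, (Rabs_pos_eq (Rpower (1 + r) 3)) by lra.
  assert (Hq' : Rpower (1 + r) 3 * weight q r = weight (q - 3) r)
    by (unfold weight; rewrite <- Rpower_plus; f_equal; ring).
  apply Rle_lt_trans with (M * weight (q - 3) r).
  { rewrite <- Hq'. specialize (Hf x y). fold r in Hf. nra. }
  assert (Hln : Rabs (ln ((M + 1) / eps)) / (q - 3) < ln (1 + r)).
  { apply Rlt_le_trans with (ln r).
    - rewrite <- (ln_exp (Rabs _ / _)). apply ln_increasing; [apply exp_pos | fold R0; lra].
    - left. apply ln_increasing; lra. }
  assert (H3 : weight (q - 3) r < eps / (M + 1)).
  { unfold weight, Rpower. replace (eps / (M + 1)) with (exp (- ln ((M + 1) / eps))).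
    - apply exp_increasing.
      apply (Rmult_lt_compat_l (q - 3)) in Hln; [|lra].
      replace ((q - 3) * (Rabs (ln ((M + 1) / eps)) / (q - 3))) with (Rabs (ln ((M + 1) / eps)))
        in Hln by (field; lra).
      pose proof (Rle_abs (ln ((M + 1) / eps))). lra.
    - rewrite exp_Ropp, exp_ln; [field; lra | apply Rdiv_lt_0_compat; lra]. }
  assert (0 < weight (q - 3) r) by (apply weight_pos; auto).
  apply Rle_lt_trans with ((M + 1) * weight (q - 3) r); [nra|].
  apply Rmult_lt_compat_l with (r := M + 1) in H3; [|lra].
  replace ((M + 1) * (eps / (M + 1))) with eps in H3 by (field; lra). lra.
Qed.

Lemma Rabs_lt_bracket_of_scaled u v : Rabs (v / bracket u) < 1 -> Rabs v < bracket u.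
Proof.
  intros H. pose proof (bracket_pos u).
  rewrite Rabs_div, (Rabs_pos_eq (bracket u)) in H by lra.
  apply (Rmult_lt_compat_r (bracket u)) in H; auto.
  unfold Rdiv in H. rewrite Rmult_assoc, Rinv_l in H; lra.
Qed.

Lemma weight_Rabs_le_in_strip q u v : 0 <= q -> Rabs v <= bracket u ->
  weight q (Rabs u) <= Rpower 2 q * weight q (norm2 u v).
Proof.
  intros Hq H. apply weight_doubling; auto using Rabs_pos, norm2_ge0.
  pose proof (norm2_le_Rabs_plus u v). pose proof (bracket_le u). lra.
Qed.

Lemma scaled_le_m1 u v : v / bracket u <= -1 -> v <= 0.
Proof.
  intros H. pose proof (bracket_pos u). destruct (Rle_lt_dec v 0); auto.
  assert (0 < v / bracket u) by (apply Rdiv_lt_0_compat; lra). lra.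
Qed.

Lemma scaled_ge_1 u v : 1 <= v / bracket u -> 0 <= v.
Proof.
  intros H. pose proof (bracket_pos u). destruct (Rle_lt_dec 0 v); auto.
  assert (v / bracket u < 0) by (apply Rdiv_neg_pos; lra). lra.
Qed.

Lemma Rabs_mult_le a b A B : Rabs a <= A -> Rabs b <= B -> Rabs (a * b) <= A * B.
Proof. intros. rewrite Rabs_mult. apply Rmult_le_compat; auto; apply Rabs_pos. Qed.

Section StepCorrection.

(* G u v stands for int_(-oo)^v h u and g u for int_R h u. *)
Variables (G : R -> R -> R) (g : R -> R) (q K : R).
Hypothesis q_ge0 : 0 <= q.
Hypothesis K_ge0 : 0 <= K.
Hypothesis G_lower : forall u v, v <= 0 -> Rabs (G u v) <= K * weight q (norm2 u v).
Hypothesis G_upper : forall u v, 0 <= v -> Rabs (g u - G u v) <= K * weight q (norm2 u v).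
Hypothesis g_bound : forall u, Rabs (g u) <= K * weight q (Rabs u).

Lemma Rabs_step_correction_le u v :
  Rabs (- G u v + g u * smooth_step (v / bracket u)) <= (1 + 2 * Rpower 2 q) * K * weight q (norm2 u v).
Proof.
  set (r := norm2 u v). set (z := v / bracket u).
  assert (Hc : 0 < Rpower 2 q) by apply exp_pos.
  assert (HP : 0 < weight q r) by apply weight_pos, norm2_ge0.
  assert (HKP : 0 <= K * weight q r) by nra.
  destruct (Rle_lt_dec z (-1)) as [H1|H1].
  - unfold z. rewrite smooth_step_low, Rmult_0_r, Rplus_0_r, Rabs_Ropp by auto.
    eapply Rle_trans; [apply G_lower, (scaled_le_m1 u v); auto|]. fold r. nra.
  - destruct (Rle_lt_dec 1 z) as [H2|H2].
    + unfold z. rewrite smooth_step_high, Rmult_1_r by auto.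
      replace (- G u v + g u) with (g u - G u v) by ring.
      eapply Rle_trans; [apply G_upper, (scaled_ge_1 u v); auto|]. fold r. nra.
    + assert (Hs : Rabs v < bracket u)
        by (apply Rabs_lt_bracket_of_scaled; fold z; apply Rabs_def1; lra).
      assert (HsP := weight_Rabs_le_in_strip q u v q_ge0 ltac:(lra)). fold r in HsP.
      pose proof (smooth_step_bound z). pose proof (g_bound u).
      pose proof (weight_pos q (Rabs u) (Rabs_pos u)).
      assert (HG : Rabs (G u v) <= K * weight q r + K * weight q (Rabs u)).
      { destruct (Rle_lt_dec v 0) as [Hv|Hv].
        - pose proof (G_lower u v Hv) as HGl. fold r in HGl. nra.
        - replace (G u v) with (g u - (g u - G u v)) by ring.
          eapply Rle_trans; [apply Rabs_triang|]. rewrite Rabs_Ropp.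
          pose proof (G_upper u v ltac:(lra)) as HGu. fold r in HGu. lra. }
      eapply Rle_trans; [apply Rabs_triang|].
      rewrite Rabs_Ropp, Rabs_mult, (Rabs_pos_eq (smooth_step z)) by lra.
      assert (Rabs (g u) * smooth_step z <= K * weight q (Rabs u))
        by (pose proof (Rabs_pos (g u)); nra).
      nra.
Qed.

End StepCorrection.

Section PotentialBounds.

Variables (F F_x : R -> R -> R) (b b' b_prim : R -> R) (q K : R).
Hypothesis q_ge0 : 0 <= q.
Hypothesis K_ge0 : 0 <= K.
Hypothesis F_lower : forall u v, v <= 0 -> Rabs (F u v) <= K * weight q (norm2 u v).
Hypothesis F_upper : forall u v, 0 <= v -> Rabs (b u - F u v) <= K * weight q (norm2 u v).
Hypothesis F_x_lower : forall u v, v <= 0 -> Rabs (F_x u v) <= K * weight q (norm2 u v).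
Hypothesis F_x_upper : forall u v, 0 <= v -> Rabs (b' u - F_x u v) <= K * weight q (norm2 u v).
Hypothesis b_bound : forall u, Rabs (b u) <= K * weight q (Rabs u).
Hypothesis b'_bound : forall u, Rabs (b' u) <= K * weight q (Rabs u).
Hypothesis b_prim_bound : forall u, Rabs (b_prim u) <= K * weight (q - 1) (Rabs u).

Lemma Rabs_b_prim_div_bracket_le u : Rabs (b_prim u / bracket u) <= 2 * K * weight q (Rabs u).
Proof.
  pose proof (bracket_pos u). pose proof (bracket_le u). pose proof (Rabs_le_bracket u).
  pose proof (bracket_ge1 u). pose proof (Rabs_pos u).
  rewrite Rabs_div, (Rabs_pos_eq (bracket u)) by lra.
  replace q with ((q - 1) + 1) by ring. rewrite <- weight_plus, weight_1 by lra.
  assert (Hi : / bracket u <= 2 * / (1 + Rabs u)).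
  { apply (Rmult_le_reg_l (bracket u)); auto. rewrite Rinv_r by lra.
    apply (Rmult_le_reg_r (1 + Rabs u)); [lra|].
    replace (bracket u * (2 * / (1 + Rabs u)) * (1 + Rabs u)) with (2 * bracket u) by (field; lra).
    lra. }
  unfold Rdiv. replace (2 * K * (weight (q - 1) (Rabs u) * / (1 + Rabs u)))
    with (K * weight (q - 1) (Rabs u) * (2 * / (1 + Rabs u))) by ring.
  apply Rmult_le_compat; auto using Rabs_pos. left; apply Rinv_0_lt_compat; lra.
Qed.

Lemma strip_term_le (T : R -> R -> R) c u v : 0 <= c ->
  (1 <= Rabs (v / bracket u) -> T u v = 0) ->
  (Rabs (v / bracket u) < 1 -> Rabs (T u v) <= c * K * weight q (Rabs u)) ->
  Rabs (T u v) <= c * Rpower 2 q * K * weight q (norm2 u v).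
Proof.
  intros Hc Hout Hin.
  assert (Hc2 : 0 < Rpower 2 q) by apply exp_pos.
  assert (0 < weight q (norm2 u v)) by apply weight_pos, norm2_ge0.
  destruct (Rle_lt_dec 1 (Rabs (v / bracket u))) as [Hx|Hx].
  - rewrite Hout, Rabs_R0 by auto. apply Rmult_le_pos; [|lra]. apply Rmult_le_pos; nra.
  - eapply Rle_trans; [apply Hin; auto|].
    pose proof (weight_Rabs_le_in_strip q u v ltac:(lra)
                  ltac:(left; apply Rabs_lt_bracket_of_scaled; auto)).
    replace (c * Rpower 2 q * K * weight q (norm2 u v))
      with (c * K * (Rpower 2 q * weight q (norm2 u v))) by ring.
    apply Rmult_le_compat_l; nra.
Qed.

Local Ltac vanishes_off_strip :=
  intros Hz; destruct (bump_out _ Hz) as [Hc1 Hc2];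
  rewrite ?Hc1, ?Hc2; unfold Rdiv; rewrite ?Rmult_0_r, ?Rmult_0_l; reflexivity.

Lemma Rabs_Ay_le u v : Rabs (Ay b_prim u v) <= 2 * Rpower 2 q * K * weight q (norm2 u v).
Proof.
  apply (strip_term_le (Ay b_prim)); [lra | unfold Ay; vanishes_off_strip|].
  intros Hz. pose proof (bracket_pos u).
  replace (Ay b_prim u v) with ((b_prim u / bracket u) * bump (v / bracket u)) by (unfold Ay; field; lra).
  rewrite <- (Rmult_1_r (2 * K * weight q (Rabs u))).
  apply Rabs_mult_le; [apply Rabs_b_prim_div_bracket_le | apply Rabs_bump_le].
Qed.

Lemma Rabs_Ay_y_le u v : Rabs (Ay_y b_prim u v) <= 8 * Rpower 2 q * K * weight q (norm2 u v).
Proof.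
  apply (strip_term_le (Ay_y b_prim)); [lra | unfold Ay_y; vanishes_off_strip|].
  intros Hz. pose proof (bracket_pos u).
  replace (Ay_y b_prim u v) with ((b_prim u / bracket u) * (bump' (v / bracket u) * (1 / bracket u)))
    by (unfold Ay_y; field; lra).
  replace (8 * K * weight q (Rabs u)) with ((2 * K * weight q (Rabs u)) * (4 * 1)) by ring.
  apply Rabs_mult_le; [apply Rabs_b_prim_div_bracket_le|].
  apply Rabs_mult_le; [apply Rabs_bump'_le | apply Rabs_inv_bracket_le].
Qed.

Lemma Rabs_Ax_le u v : Rabs (Ax F b b_prim u v) <= (1 + 4 * Rpower 2 q) * K * weight q (norm2 u v).
Proof.
  set (T u v := b_prim u * bump (v / bracket u) * v * bracket' u / bracket u ^ 2).
  assert (HT : Rabs (T u v) <= 2 * Rpower 2 q * K * weight q (norm2 u v)).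
  { apply strip_term_le; [lra | unfold T; vanishes_off_strip|].
    intros Hz. pose proof (bracket_pos u).
    replace (T u v) with ((b_prim u / bracket u) * (bump (v / bracket u) * (v / bracket u) * bracket' u))
      by (unfold T; field; lra).
    replace (2 * K * weight q (Rabs u)) with ((2 * K * weight q (Rabs u)) * (1 * 1 * 1)) by ring.
    apply Rabs_mult_le; [apply Rabs_b_prim_div_bracket_le|].
    apply Rabs_mult_le; [apply Rabs_mult_le; [apply Rabs_bump_le | lra] | apply Rabs_bracket'_le]. }
  replace (Ax F b b_prim u v) with ((- F u v + b u * smooth_step (v / bracket u)) - T u v)
    by (unfold Ax, T; ring).
  pose proof (Rabs_step_correction_le F b q K ltac:(lra) K_ge0 F_lower F_upper b_bound u v).
  pose proof (Rabs_triang (- F u v + b u * smooth_step (v / bracket u)) (- T u v)).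
  rewrite Rabs_Ropp in *. unfold Rminus. lra.
Qed.

Lemma Rabs_b_term_le u v :
  Rabs (2 * b u * bump (v / bracket u) * v * bracket' u / bracket u ^ 2)
    <= 2 * Rpower 2 q * K * weight q (norm2 u v).
Proof.
  apply (strip_term_le (fun u v => 2 * b u * bump (v / bracket u) * v * bracket' u / bracket u ^ 2));
    [lra | vanishes_off_strip|].
  intros Hz. pose proof (bracket_pos u).
  replace (2 * b u * bump (v / bracket u) * v * bracket' u / bracket u ^ 2)
    with (b u * (2 * bump (v / bracket u) * (v / bracket u) * bracket' u * (1 / bracket u)))
    by (field; lra).
  replace (2 * K * weight q (Rabs u)) with ((K * weight q (Rabs u)) * (2 * 1 * 1 * 1 * 1)) by ring.
  apply Rabs_mult_le; [apply b_bound|].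
  apply Rabs_mult_le; [|apply Rabs_inv_bracket_le]. apply Rabs_mult_le; [|apply Rabs_bracket'_le].
  apply Rabs_mult_le; [|lra]. apply Rabs_mult_le; [rewrite Rabs_pos_eq; lra | apply Rabs_bump_le].
Qed.

Lemma Rabs_bump'_term_le u v :
  Rabs (b_prim u * bump' (v / bracket u) * v ^ 2 * bracket' u ^ 2 / bracket u ^ 4)
    <= 8 * Rpower 2 q * K * weight q (norm2 u v).
Proof.
  apply (strip_term_le
           (fun u v => b_prim u * bump' (v / bracket u) * v ^ 2 * bracket' u ^ 2 / bracket u ^ 4));
    [lra | vanishes_off_strip|].
  intros Hz. pose proof (bracket_pos u).
  replace (b_prim u * bump' (v / bracket u) * v ^ 2 * bracket' u ^ 2 / bracket u ^ 4)
    with ((b_prim u / bracket u) * (bump' (v / bracket u)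
      * ((v / bracket u) * (v / bracket u)) * (bracket' u * bracket' u) * (1 / bracket u)))
    by (field; lra).
  replace (8 * K * weight q (Rabs u))
    with ((2 * K * weight q (Rabs u)) * (4 * (1 * 1) * (1 * 1) * 1)) by ring.
  apply Rabs_mult_le; [apply Rabs_b_prim_div_bracket_le|].
  apply Rabs_mult_le; [|apply Rabs_inv_bracket_le].
  apply Rabs_mult_le; [apply Rabs_mult_le; [apply Rabs_bump'_le | apply Rabs_mult_le; lra]|].
  apply Rabs_mult_le; apply Rabs_bracket'_le.
Qed.

Lemma Rabs_bracket''_term_le u v :
  Rabs (b_prim u * bump (v / bracket u) * v
          * (bracket'' u / bracket u ^ 2 - 2 * bracket' u ^ 2 / bracket u ^ 3))
    <= 6 * Rpower 2 q * K * weight q (norm2 u v).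
Proof.
  apply (strip_term_le (fun u v => b_prim u * bump (v / bracket u) * v
           * (bracket'' u / bracket u ^ 2 - 2 * bracket' u ^ 2 / bracket u ^ 3)));
    [lra | vanishes_off_strip|].
  intros Hz. pose proof (bracket_pos u).
  replace (b_prim u * bump (v / bracket u) * v
             * (bracket'' u / bracket u ^ 2 - 2 * bracket' u ^ 2 / bracket u ^ 3))
    with ((b_prim u / bracket u) * (bump (v / bracket u) * (v / bracket u)
      * (bracket'' u - 2 * (bracket' u * bracket' u) * (1 / bracket u))))
    by (field; lra).
  replace (6 * K * weight q (Rabs u)) with ((2 * K * weight q (Rabs u)) * (1 * 1 * 3)) by ring.
  apply Rabs_mult_le; [apply Rabs_b_prim_div_bracket_le|].
  apply Rabs_mult_le; [apply Rabs_mult_le; [apply Rabs_bump_le | lra]|].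
  assert (Rabs (2 * (bracket' u * bracket' u) * (1 / bracket u)) <= 2 * (1 * 1) * 1).
  { apply Rabs_mult_le; [|apply Rabs_inv_bracket_le].
    apply Rabs_mult_le; [rewrite Rabs_pos_eq; lra | apply Rabs_mult_le; apply Rabs_bracket'_le]. }
  pose proof (Rabs_bracket''_le u).
  unfold Rminus. eapply Rle_trans; [apply Rabs_triang|]. rewrite Rabs_Ropp. lra.
Qed.

Lemma Rabs_div_A_le u v :
  Rabs (Ax_x F_x b b' b_prim u v + Ay_y b_prim u v) <= (1 + 26 * Rpower 2 q) * K * weight q (norm2 u v).
Proof.
  pose proof (Rabs_step_correction_le F_x b' q K ltac:(lra) K_ge0 F_x_lower F_x_upper b'_bound u v).
  pose proof (Rabs_b_term_le u v). pose proof (Rabs_bump'_term_le u v).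
  pose proof (Rabs_bracket''_term_le u v). pose proof (Rabs_Ay_y_le u v).
  unfold Ax_x. set (w := weight q (norm2 u v)) in *.
  match goal with |- Rabs (?a - ?b + ?c - ?d + ?e) <= _ =>
    pose proof (Rabs_triang (a - b + c - d) e); pose proof (Rabs_triang (a - b + c) (- d));
    pose proof (Rabs_triang (a - b) c); pose proof (Rabs_triang a (- b)) end.
  unfold Rminus in *. rewrite !Rabs_Ropp in *. lra.
Qed.

End PotentialBounds.

Section Construction.

Variable B : R -> R -> R.
Variables C s : R.
Hypothesis C_ge0 : 0 <= C.
Hypothesis s_gt4 : 4 < s.
Hypothesis B_decay : forall x y, Rabs (B x y) <= C * weight s (norm2 x y).
Hypothesis B_x_decay : forall x y, Rabs (pd1 B x y) <= C * weight s (norm2 x y).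
Hypothesis B_cont : forall x y, continuous (fun p : R * R => B (fst p) (snd p)) (x, y).
Hypothesis B_x_cont : forall x y, continuous (fun p : R * R => pd1 B (fst p) (snd p)) (x, y).
Hypothesis B_dx : forall x y, ex_derive (fun t => B t y) x.
Hypothesis B_mean_zero : integral_R2_is B 0.

Let F := prim_y B.
Let F_x := prim_y (pd1 B).
Let b := total_y B.
Let b' := total_y (pd1 B).
Let Kb := 2 * C * tail_const s.
Let K := Kb * (1 + tail_const (s - 1)).

Lemma Kb_ge0 : 0 <= Kb.
Proof. pose proof (tail_const_pos s). unfold Kb. nra. Qed.

Lemma K_ge : C * tail_const s <= K /\ Kb <= K /\ Kb * tail_const (s - 1) <= K.
Proof.
  pose proof (tail_const_pos s). pose proof (tail_const_pos (s - 1)). pose proof Kb_ge0.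
  unfold K, Kb in *. repeat split; nra.
Qed.

Lemma B_integrable x a c : ex_RInt (tan_subst B x) a c.
Proof. apply (ex_RInt_tan_subst_of_weight B C s); auto; lra. Qed.

Lemma B_x_integrable x a c : ex_RInt (tan_subst (pd1 B) x) a c.
Proof. apply (ex_RInt_tan_subst_of_weight (pd1 B) C s); auto; lra. Qed.

Lemma is_derive_total_y_param th u :
  is_derive (fun z => RInt (tan_subst B z) (- PI / 2) th) u (RInt (tan_subst (pd1 B) u) (- PI / 2) th).
Proof.
  apply (is_derive_RInt_tan_subst_param B C); auto using B_integrable.
  apply (weight_3_Rabs_of_weight _ C s); auto; lra.
Qed.

Lemma F_dx u v : is_derive (fun z => F z v) u (F_x u v).
Proof. apply is_derive_total_y_param. Qed.

Lemma b_deriv u : is_derive b u (b' u).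
Proof. apply is_derive_total_y_param. Qed.

Lemma F_dy u v : is_derive (fun z => F u z) v (B u v).
Proof.
  apply (is_derive_RInt_tan_subst_atan B C); auto. apply (weight_3_Rabs_of_weight _ C s); auto; lra.
Qed.

Lemma F_lower u v : v <= 0 -> Rabs (F u v) <= K * weight (s - 1) (norm2 u v).
Proof.
  intros Hv. pose proof K_ge as [HK _]. pose proof (weight_pos (s - 1) _ (norm2_ge0 u v)).
  eapply Rle_trans; [apply (prim_y_lower_bound B C s); auto using B_integrable; lra|].
  apply Rmult_le_compat_r; lra.
Qed.

Lemma F_upper u v : 0 <= v -> Rabs (b u - F u v) <= K * weight (s - 1) (norm2 u v).
Proof.
  intros Hv. pose proof K_ge as [HK _]. pose proof (weight_pos (s - 1) _ (norm2_ge0 u v)).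
  eapply Rle_trans; [apply (prim_y_upper_bound B C s); auto using B_integrable; lra|].
  apply Rmult_le_compat_r; lra.
Qed.

Lemma F_x_lower u v : v <= 0 -> Rabs (F_x u v) <= K * weight (s - 1) (norm2 u v).
Proof.
  intros Hv. pose proof K_ge as [HK _]. pose proof (weight_pos (s - 1) _ (norm2_ge0 u v)).
  eapply Rle_trans; [apply (prim_y_lower_bound (pd1 B) C s); auto using B_x_integrable; lra|].
  apply Rmult_le_compat_r; lra.
Qed.

Lemma F_x_upper u v : 0 <= v -> Rabs (b' u - F_x u v) <= K * weight (s - 1) (norm2 u v).
Proof.
  intros Hv. pose proof K_ge as [HK _]. pose proof (weight_pos (s - 1) _ (norm2_ge0 u v)).
  eapply Rle_trans; [apply (prim_y_upper_bound (pd1 B) C s); auto using B_x_integrable; lra|].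
  apply Rmult_le_compat_r; lra.
Qed.

Lemma b_bound_Kb u : Rabs (b u) <= Kb * weight (s - 1) (Rabs u).
Proof. apply (total_y_bound B C s); auto using B_integrable; lra. Qed.

Lemma b_bound u : Rabs (b u) <= K * weight (s - 1) (Rabs u).
Proof.
  pose proof K_ge as [_ [HK _]]. pose proof (weight_pos (s - 1) _ (Rabs_pos u)).
  eapply Rle_trans; [apply b_bound_Kb|]. apply Rmult_le_compat_r; lra.
Qed.

Lemma b'_bound u : Rabs (b' u) <= K * weight (s - 1) (Rabs u).
Proof.
  pose proof K_ge as [_ [HK _]]. pose proof (weight_pos (s - 1) _ (Rabs_pos u)).
  eapply Rle_trans; [apply (total_y_bound (pd1 B) C s); auto using B_x_integrable; lra|].
  apply Rmult_le_compat_r; [lra | exact HK].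
Qed.

Let b_y (_ t : R) := b t.

Lemma b_y_decay t : Rabs (b_y 0 t) <= Kb * weight (s - 1) (norm2 0 t).
Proof. rewrite norm2_0_l. apply b_bound_Kb. Qed.

Lemma b_y_decay_3 x t : Rabs (b_y x t) <= Kb * weight 3 (Rabs t).
Proof.
  eapply Rle_trans; [apply b_bound_Kb|]. apply Rmult_le_compat_l; [apply Kb_ge0|].
  apply weight_le_exponent; [lra | apply Rabs_pos].
Qed.

Lemma b_y_cont x t : continuous (fun p : R * R => b_y (fst p) (snd p)) (x, t).
Proof.
  apply (continuous_comp (fun p : R * R => snd p) b); [apply continuous_snd|].
  apply (continuous_of_is_derive _ _ b_deriv).
Qed.

Lemma b_y_integrable a c : ex_RInt (tan_subst b_y 0) a c.
Proof. apply (ex_RInt_tan_subst b_y Kb); auto using Kb_ge0, b_y_decay_3, b_y_cont. Qed.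

Let b_prim := prim_y b_y 0.

Lemma b_prim_deriv u : is_derive b_prim u (b u).
Proof. apply (is_derive_RInt_tan_subst_atan b_y Kb); auto using Kb_ge0, b_y_cont, b_y_decay_3. Qed.

Lemma total_y_b_y : total_y b_y 0 = 0.
Proof.
  assert (Hb : is_RInt_gen b (Rbar_locally m_infty) (Rbar_locally p_infty) 0).
  { apply (is_RInt_gen_ext (fun x => RInt_gen (B x) (Rbar_locally m_infty) (Rbar_locally p_infty)));
      [|exact B_mean_zero].
    apply filter_forall. intros ab x _. apply is_RInt_gen_unique.
    apply (is_RInt_gen_tan_subst B C); auto. apply (weight_3_Rabs_of_weight _ C s); auto; lra. }
  assert (Hb' := is_RInt_gen_tan_subst b_y Kb Kb_ge0 b_y_decay_3 b_y_cont 0).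
  apply (@is_RInt_gen_unique R_CompleteNormedModule) in Hb, Hb';
    try apply Proper_StrongProper, Rbar_locally_filter.
  unfold total_y. rewrite <- Hb'. exact Hb.
Qed.

(* Since b has mean zero, b_prim decays at both ends. *)
Lemma b_prim_bound u : Rabs (b_prim u) <= K * weight (s - 1 - 1) (Rabs u).
Proof.
  pose proof K_ge as [_ [_ HK]]. pose proof (weight_pos (s - 1 - 1) (Rabs u) (Rabs_pos u)).
  rewrite <- (norm2_0_l u).
  destruct (Rle_lt_dec u 0) as [Hu|Hu].
  - eapply Rle_trans;
      [apply (prim_y_lower_bound b_y Kb (s - 1)); auto using Kb_ge0, b_y_decay, b_y_integrable; lra|].
    rewrite norm2_0_l in *. apply Rmult_le_compat_r; lra.
  - replace (b_prim u) with (- (total_y b_y 0 - prim_y b_y 0 u))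
      by (rewrite total_y_b_y; unfold b_prim; ring).
    rewrite Rabs_Ropp.
    eapply Rle_trans;
      [apply (prim_y_upper_bound b_y Kb (s - 1)); auto using Kb_ge0, b_y_decay, b_y_integrable; lra|].
    rewrite norm2_0_l in *. apply Rmult_le_compat_r; lra.
Qed.

Lemma vector_potential_exists :
  exists A1 A2 : R -> R -> R,
    differentiable2 A1 /\ differentiable2 A2 /\
    (forall x y, pd1 A2 x y - pd2 A1 x y = B x y) /\
    decay_little 3 (fun x y => pd1 A1 x y + pd2 A2 x y) /\
    decay_little 3 (fun x y => norm2 (A1 x y) (A2 x y)).
Proof.
  assert (B_cont_2d : forall u v, continuity_2d_pt B u v)
    by (intros; apply continuity_2d_pt_filterlim, B_cont).
  assert (K_ge0 : 0 <= K) by (pose proof K_ge as [_ [HK _]]; pose proof Kb_ge0; lra).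
  assert (Hc : 0 < Rpower 2 (s - 1)) by apply exp_pos.
  pose proof (is_derive_Ax_x F F_x b b' b_prim F_dx b_deriv b_prim_deriv) as HAx_x.
  pose proof (is_derive_Ax_y B F b b_prim F_dy) as HAx_y.
  pose proof (is_derive_Ay_x b b_prim b_prim_deriv) as HAy_x.
  pose proof (is_derive_Ay_y b_prim) as HAy_y.
  exists (Ax F b b_prim), (Ay b_prim). repeat split.
  - intros x y. apply (ex_filterdiff_of_partials _ _ _ x y HAx_x HAx_y).
    apply (continuity_2d_pt_Ax_y B b b' b_prim); auto using b_deriv, b_prim_deriv.
  - intros x y. apply (ex_filterdiff_of_partials _ _ _ x y HAy_x HAy_y).
    apply (continuity_2d_pt_Ay_y b), b_prim_deriv.
  - intros x y. rewrite (pd1_of_is_derive _ _ HAy_x), (pd2_of_is_derive _ _ HAx_y). apply curl_A.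
  - apply (decay_little_3_of_weight _ ((1 + 26 * Rpower 2 (s - 1)) * K) (s - 1)); [nra | lra|].
    intros x y. rewrite (pd1_of_is_derive _ _ HAx_x), (pd2_of_is_derive _ _ HAy_y).
    apply (Rabs_div_A_le F_x b b' b_prim (s - 1) K);
      auto using F_x_lower, F_x_upper, b_bound, b'_bound, b_prim_bound; lra.
  - apply (decay_little_3_of_weight _ ((1 + 6 * Rpower 2 (s - 1)) * K) (s - 1)); [nra | lra|].
    intros x y. rewrite Rabs_pos_eq by apply norm2_ge0.
    eapply Rle_trans; [apply norm2_le_Rabs_plus|].
    pose proof (Rabs_Ax_le F b b_prim (s - 1) K ltac:(lra) K_ge0
                  F_lower F_upper b_bound b_prim_bound x y).
    pose proof (Rabs_Ay_le b_prim (s - 1) K ltac:(lra) K_ge0 b_prim_bound x y).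
    lra.
Qed.

End Construction.

Lemma weight_bounds_of_symbol_bounds (B : R -> R -> R) s :
  (forall k l : nat, exists C : R, forall x y,
     Rabs (dmulti k l B x y) <= C * Rpower (1 + norm2 x y) (- s - INR (k + l))) ->
  exists C, 0 <= C /\
    (forall x y, Rabs (B x y) <= C * weight s (norm2 x y)) /\
    (forall x y, Rabs (pd1 B x y) <= C * weight s (norm2 x y)).
Proof.
  intros Hdk. destruct (Hdk 0%nat 0%nat) as [C0 HC0]. destruct (Hdk 1%nat 0%nat) as [C1 HC1].
  exists (Rabs C0 + Rabs C1). pose proof (Rabs_pos C0). pose proof (Rabs_pos C1).
  repeat split; [lra | |]; intros x y; pose proof (weight_pos s _ (norm2_ge0 x y)).
  - specialize (HC0 x y). simpl in HC0. rewrite Rminus_0_r in HC0.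
    eapply Rle_trans; [exact HC0|]. pose proof (Rle_abs C0).
    change (Rpower (1 + norm2 x y) (- s)) with (weight s (norm2 x y)). nra.
  - specialize (HC1 x y). simpl in HC1.
    replace (Rpower (1 + norm2 x y) (- s - 1)) with (weight (s + 1) (norm2 x y)) in HC1
      by (unfold weight; f_equal; ring).
    pose proof (weight_le_exponent (s + 1) s _ ltac:(lra) (norm2_ge0 x y)).
    pose proof (weight_pos (s + 1) _ (norm2_ge0 x y)). pose proof (Rle_abs C1).
    eapply Rle_trans; [exact HC1|]. nra.
Qed.

Theorem lemma4p5 (B : R -> R -> R) :
  smooth2 B ->
  (exists sB : R, 4 < sB /\
     forall k l : nat, exists C : R, forall x y,
       Rabs (dmulti k l B x y)
         <= C * Rpower (1 + norm2 x y) (- sB - INR (k + l))) ->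
  integral_R2_is B 0 ->
  exists A1 A2 : R -> R -> R,
    differentiable2 A1 /\ differentiable2 A2 /\
    (forall x y, pd1 A2 x y - pd2 A1 x y = B x y) /\
    decay_little 3 (fun x y => pd1 A1 x y + pd2 A2 x y) /\
    decay_little 3 (fun x y => norm2 (A1 x y) (A2 x y)).
Proof.
  intros Hsmooth [s [Hs Hsymbol]] Hmean.
  destruct (weight_bounds_of_symbol_bounds B s Hsymbol) as [C [HC [HB HBx]]].
  apply (vector_potential_exists B C s); auto; intros x y.
  - exact (proj1 (Hsmooth nil) x y).
  - exact (proj1 (Hsmooth (cons true nil)) x y).
  - exact (proj1 (proj2 (Hsmooth nil) x y)).
Qed.
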